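(* Let $0=x_1<\dots<x_N=1$ be a partition of $I=[0,1]$, let $\{q_n\}$ be a sequence in $(0,1]$ with $\lim q_n=1$, and let $\alpha_i$, $i\in\mathbb{N}_{N-1}$, be bounded functions on $I$ with $\|\alpha_i\|_\infty<1$. Let $\{\lambda_i\}_{i\ge1}$ be a sequence of distinct positive real numbers with $\inf_{i\ge1}\lambda_i>0$ and $\sum_{i=1}^\infty\frac1{\lambda_i}=\infty$. Then the set \[ S=\bigcup_{n=1}^\infty\bigcup_{m=1}^\infty\operatorname{span}\{1,(x^{\lambda_1})^{(q_n,\alpha)}_n,\dots,(x^{\lambda_m})^{(q_n,\alpha)}_n\} \] is dense in $C[0,1]$ with respect to the sup-norm.
   Context: For $q\in(0,1]$: $[k]_q=\frac{1-q^k}{1-q}$ ($q\ne1$), $[k]_1=k$, $q$-factorials, $\binom{n}{k}_q=\frac{[n]_q!}{[k]_q![n-k]_q!}$. On $[0,1]$ the quantum MKZ operator is $M_{n,q}h(x)=\prod_{j=0}^n(1-q^jx)\sum_{k\ge0}\binom{n+k}{k}_q x^k h\!\left(\frac{[k]_q}{[k+n]_q}\right)$ for $0\le x<1$, $M_{n,q}h(1)=h(1)$. Let $u_i(x)=a_ix+b_i$ be the affine maps with $u_i(0)=x_i$, $u_i(1)=x_{i+1}$, $i\in\mathbb{N}_{N-1}$. For $h\in C[0,1]$, $h^{(q,\alpha)}_n$ denotes the unique bounded function $G:[0,1]\to\mathbb{R}$ with $G(u_i(x))=h(u_i(x))+\alpha_i(x)(G(x)-M_{n,q}h(x))$ for all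 $x\in I$, $i\in\mathbb{N}_{N-1}$; $(x^{\lambda})^{(q,\alpha)}_n$ is this function for $h(x)=x^\lambda$. *)

From Stdlib Require Import Reals Lra.
From Coquelicot Require Import Coquelicot.
Open Scope R_scope.

Definition qint (q : R) (k : nat) : R :=
  if Req_EM_T q 1 then INR k else (1 - q ^ k) / (1 - q).

Fixpoint qfact (q : R) (n : nat) : R :=
  match n with
  | O => 1
  | S m => qfact q m * qint q (S m)
  end.

Definition qbinom (q : R) (n k : nat) : R :=
  qfact q n / (qfact q k * qfact q (n - k)).

Fixpoint qprod (q : R) (n : nat) (x : R) : R :=
  match n with
  | O => 1 - x
  | S m => qprod q m x * (1 - q ^ (S m) * x)
  end.

Definition MKZ (q : R) (n : nat) (h : R -> R) (x : R) : R :=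
  if Rlt_dec x 1 then
    qprod q n x *
      Series (fun k => qbinom q (n + k) k * x ^ k * h (qint q k / qint q (k + n)))
  else h 1.

Definition uaff (xs : nat -> R) (i : nat) (x : R) : R :=
  xs i + (xs (S i) - xs i) * x.

(* G is a (the) bounded function on I = [0,1] satisfying the self-referential
   equation defining h^{(q,alpha)}_n; indices i range over {1,...,N-1}. *)
Definition is_fractal (N : nat) (xs : nat -> R) (alpha : nat -> R -> R)
  (q : R) (n : nat) (h G : R -> R) : Prop :=
  (exists B, forall x, 0 <= x <= 1 -> Rabs (G x) <= B) /\
  (forall (i : nat) (x : R), (1 <= i <= N - 1)%nat -> 0 <= x <= 1 ->
     G (uaff xs i x) = h (uaff xs i x) + alpha i x * (G x - MKZ q n h x)).

Definition xpow (lam : R) (x : R) : R :=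
  if Rle_dec x 0 then 0 else Rpower x lam.

(* By Müntz's theorem (inf lam_i > 0 and
   sum 1/lam_i = oo) a continuous f is uniformly close to some c_0 + sum_(j <= m) c_j x^lam_j.
   The MKZ operators are positive, with weights of mean x and variance at most 1/[n+1]_q, so
   M_(n,q_n) h -> h uniformly for continuous h because [n+1]_(q_n) -> oo.  Finally
   (x^lam)^(q,alpha)_n = x^lam + D, where D is the fixed point of a Read-Bajraktarevic operator
   of contraction ratio c = max ||alpha_i|| < 1 driven by x^lam - M_(n,q) x^lam; hence it lies
   within c/(1-c) ||x^lam - M_(n,q) x^lam|| of x^lam, and taking n large for the finitely many
   exponents used gives the approximation.

   Müntz's theorem is proved with the recursion Q_0 = x^mu,
   Q_(k+1)(x) = (nu_(k+1) - mu) x^nu_(k+1) int_x^1 t^(-nu_(k+1)-1) Q_k(t) dt, which keeps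
   Q_k - x^mu in the span of the x^nu_i while ||Q_k|| <= prod_(i <= k) |1 - mu/nu_i|.  This
   product tends to 0 when nu = lam and mu < inf lam, and also when the nu_i accumulate below
   an a that is already reached and mu < 3a/2; so every x^mu, hence every monomial, is
   approximable, and Bernstein polynomials finish the proof. *)

From Stdlib Require Import Reals Lra Lia Arith Classical IndefiniteDescription.
From Coquelicot Require Import Coquelicot.
Open Scope R_scope.

(* Coquelicot states these over an abstract [plus] and [mult], which rewriting does not match
   against [Rplus] and [Rmult]. *)
Lemma sum_n_m_Rext (u v : nat -> R) n m : (forall k, u k = v k) ->
  sum_n_m u n m = sum_n_m v n m.
Proof. intros H. apply sum_n_m_ext. exact H. Qed.

Lemma sum_n_m_Rplus (u v : nat -> R) n m :
  sum_n_m (fun k => u k + v k) n m = sum_n_m u n m + sum_n_m v n m.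
Proof. exact (sum_n_m_plus (G:=R_AbelianMonoid) u v n m). Qed.

Lemma sum_n_m_Rmult_l (a : R) (u : nat -> R) n m :
  sum_n_m (fun k => a * u k) n m = a * sum_n_m u n m.
Proof. exact (sum_n_m_mult_l (K:=R_Ring) a u n m). Qed.

Lemma sum_n_m_Rabs (u : nat -> R) n m :
  Rabs (sum_n_m u n m) <= sum_n_m (fun k => Rabs (u k)) n m.
Proof. exact (norm_sum_n_m (V := R_NormedModule) u n m). Qed.

Lemma sum_n_m_Rle (u v : nat -> R) n m : (forall k, (n <= k <= m)%nat -> u k <= v k) ->
  sum_n_m u n m <= sum_n_m v n m.
Proof.
  intros H. rewrite (sum_n_m_ext_loc u (fun k => Rmin (u k) (v k))).
  - apply sum_n_m_le. intros k. apply Rmin_r.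
  - intros k Hk. rewrite Rmin_left; auto.
Qed.

Lemma sum_n_m_Rzero (u : nat -> R) n m : (forall k, (n <= k <= m)%nat -> u k = 0) ->
  sum_n_m u n m = 0.
Proof.
  intros H. rewrite (sum_n_m_ext_loc u (fun _ => zero)) by exact H.
  exact (sum_n_m_const_zero (G:=R_AbelianMonoid) n m).
Qed.

(** * Müntz spaces *)

Definition muntz_comb (lam : nat -> R) (m : nat) (c : nat -> R) (x : R) : R :=
  c O + sum_n_m (fun j => c j * xpow (lam j) x) 1 m.

Definition truncate (m : nat) (c : nat -> R) (j : nat) : R :=
  if (j <=? m)%nat then c j else 0.

Lemma muntz_comb_truncate lam m M c x : (m <= M)%nat ->
  muntz_comb lam M (truncate m c) x = muntz_comb lam m c x.
Proof.
  intros HmM. unfold muntz_comb, truncate. simpl.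
  destruct (le_lt_dec 1 m) as [Hm|Hm].
  - rewrite (sum_n_m_Chasles _ 1 m M) by lia.
    rewrite (sum_n_m_Rzero _ (S m) M).
    + change (plus ?a 0) with (a + 0). rewrite Rplus_0_r.
      f_equal. apply sum_n_m_ext_loc. intros k Hk.
      replace (k <=? m)%nat with true by (symmetry; apply Nat.leb_le; lia). reflexivity.
    + intros k Hk. replace (k <=? m)%nat with false by (symmetry; apply Nat.leb_gt; lia). ring.
  - rewrite (sum_n_m_zero _ 1 m) by lia.
    destruct (le_lt_dec 1 M) as [HM|HM]; [|rewrite sum_n_m_zero by lia; reflexivity].
    rewrite sum_n_m_Rzero; [reflexivity|].
    intros k Hk. replace (k <=? m)%nat with false by (symmetry; apply Nat.leb_gt; lia). ring.
Qed.

Lemma muntz_comb_add lam m c1 c2 x :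
  muntz_comb lam m (fun j => c1 j + c2 j) x = muntz_comb lam m c1 x + muntz_comb lam m c2 x.
Proof.
  unfold muntz_comb.
  rewrite (sum_n_m_Rext _ (fun j => c1 j * xpow (lam j) x + c2 j * xpow (lam j) x))
    by (intros; ring).
  rewrite sum_n_m_Rplus. ring.
Qed.

Lemma muntz_comb_scale lam m a c x :
  muntz_comb lam m (fun j => a * c j) x = a * muntz_comb lam m c x.
Proof.
  unfold muntz_comb.
  rewrite (sum_n_m_Rext _ (fun j => a * (c j * xpow (lam j) x))) by (intros; ring).
  rewrite sum_n_m_Rmult_l. ring.
Qed.

Definition in_muntz_span (lam : nat -> R) (g : R -> R) : Prop :=
  exists m c, forall x, 0 <= x <= 1 -> g x = muntz_comb lam m c x.

Definition in_muntz_closure (lam : nat -> R) (g : R -> R) : Prop :=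
  forall eps, 0 < eps -> exists h, in_muntz_span lam h /\
    forall x, 0 <= x <= 1 -> Rabs (g x - h x) < eps.

Lemma muntz_span_add lam g1 g2 : in_muntz_span lam g1 -> in_muntz_span lam g2 ->
  in_muntz_span lam (fun x => g1 x + g2 x).
Proof.
  intros [m1 [c1 H1]] [m2 [c2 H2]].
  exists (m1 + m2)%nat, (fun j => truncate m1 c1 j + truncate m2 c2 j).
  intros x Hx. rewrite muntz_comb_add, !muntz_comb_truncate by lia. rewrite H1, H2 by auto.
  reflexivity.
Qed.

Lemma muntz_span_scale lam g a : in_muntz_span lam g -> in_muntz_span lam (fun x => a * g x).
Proof.
  intros [m [c H]]. exists m, (fun j => a * c j).
  intros x Hx. rewrite muntz_comb_scale, H by auto. reflexivity.
Qed.

Lemma muntz_span_const lam a : in_muntz_span lam (fun _ => a).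
Proof.
  exists O, (fun _ => a). intros x _. unfold muntz_comb.
  rewrite sum_n_m_zero by lia. change zero with 0. ring.
Qed.

Lemma muntz_span_xpow lam j : (1 <= j)%nat -> in_muntz_span lam (xpow (lam j)).
Proof.
  intros Hj. exists j, (fun k => if (k =? j)%nat then 1 else 0).
  intros x _. unfold muntz_comb. destruct j as [|j]; [lia|].
  rewrite sum_n_Sm by lia. rewrite Nat.eqb_refl, sum_n_m_Rzero.
  - simpl. change (plus 0 (1 * xpow (lam (S j)) x)) with (0 + 1 * xpow (lam (S j)) x). ring.
  - intros k Hk. replace (k =? S j)%nat with false by (symmetry; apply Nat.eqb_neq; lia). ring.
Qed.

Lemma muntz_closure_of_span lam g : in_muntz_span lam g -> in_muntz_closure lam g.
Proof.
  intros H eps Heps. exists g. split; auto. intros x _. rewrite Rminus_diag, Rabs_R0. auto.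
Qed.

Lemma muntz_closure_ext lam g g' : in_muntz_closure lam g ->
  (forall x, 0 <= x <= 1 -> g' x = g x) -> in_muntz_closure lam g'.
Proof.
  intros H E eps Heps. destruct (H eps Heps) as [h [Hh Hb]].
  exists h. split; auto. intros x Hx. rewrite E by auto. auto.
Qed.

Lemma muntz_closure_closed lam g :
  (forall eps, 0 < eps -> exists h, in_muntz_closure lam h /\
     forall x, 0 <= x <= 1 -> Rabs (g x - h x) < eps) ->
  in_muntz_closure lam g.
Proof.
  intros H eps Heps.
  destruct (H (eps/2)) as [h [Hh Hb]]; [lra|].
  destruct (Hh (eps/2)) as [k [Hk Hb2]]; [lra|].
  exists k. split; auto. intros x Hx.
  specialize (Hb x Hx). specialize (Hb2 x Hx).
  pose proof (Rabs_triang (g x - h x) (h x - k x)).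
  replace (g x - h x + (h x - k x)) with (g x - k x) in * by ring. lra.
Qed.

Lemma muntz_closure_add lam g1 g2 : in_muntz_closure lam g1 -> in_muntz_closure lam g2 ->
  in_muntz_closure lam (fun x => g1 x + g2 x).
Proof.
  intros H1 H2 eps Heps.
  destruct (H1 (eps/2)) as [h1 [Hh1 B1]]; [lra|].
  destruct (H2 (eps/2)) as [h2 [Hh2 B2]]; [lra|].
  exists (fun x => h1 x + h2 x). split; [apply muntz_span_add; auto|].
  intros x Hx. specialize (B1 x Hx). specialize (B2 x Hx).
  pose proof (Rabs_triang (g1 x - h1 x) (g2 x - h2 x)).
  replace (g1 x - h1 x + (g2 x - h2 x)) with (g1 x + g2 x - (h1 x + h2 x)) in * by ring. lra.
Qed.

Lemma muntz_closure_scale lam g a : in_muntz_closure lam g ->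
  in_muntz_closure lam (fun x => a * g x).
Proof.
  intros H eps Heps.
  assert (Ha : 0 < Rabs a + 1) by (pose proof (Rabs_pos a); lra).
  destruct (H (eps / (Rabs a + 1))) as [h [Hh B]]; [apply Rdiv_lt_0_compat; lra|].
  exists (fun x => a * h x). split; [apply muntz_span_scale; auto|].
  intros x Hx. specialize (B x Hx).
  replace (a * g x - a * h x) with (a * (g x - h x)) by ring. rewrite Rabs_mult.
  apply Rle_lt_trans with ((Rabs a + 1) * Rabs (g x - h x)).
  - apply Rmult_le_compat_r; [apply Rabs_pos | lra].
  - apply (Rmult_lt_compat_l (Rabs a + 1)) in B; [|exact Ha].
    replace ((Rabs a + 1) * (eps / (Rabs a + 1))) with eps in B by (field; lra). exact B.
Qed.

Lemma muntz_closure_sum lam (g : nat -> R -> R) n :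
  (forall k, (k <= n)%nat -> in_muntz_closure lam (g k)) ->
  in_muntz_closure lam (fun x => sum_f_R0 (fun k => g k x) n).
Proof.
  induction n as [|n IH]; intros H; simpl.
  - apply H. lia.
  - apply muntz_closure_add; [apply IH; intros k Hk|]; apply H; lia.
Qed.

(** * Müntz's theorem *)

Lemma xpow_0 a : xpow a 0 = 0.
Proof. unfold xpow. destruct (Rle_dec 0 0); [reflexivity | lra]. Qed.

Lemma xpow_pos a x : 0 < x -> xpow a x = Rpower x a.
Proof. intros H. unfold xpow. destruct (Rle_dec x 0); [lra | reflexivity]. Qed.

Lemma Rpower_pos x y : 0 < Rpower x y.
Proof. apply exp_pos. Qed.

Lemma Rpower_1_l y : Rpower 1 y = 1.
Proof. unfold Rpower. rewrite ln_1, Rmult_0_r, exp_0. reflexivity. Qed.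

Lemma xpow_unit a x : 0 < a -> 0 <= x <= 1 -> 0 <= xpow a x <= 1.
Proof.
  intros Ha Hx. unfold xpow. destruct (Rle_dec x 0); [lra|].
  split; [left; apply Rpower_pos|].
  destruct (Req_dec x 1) as [->|Hne]; [rewrite Rpower_1_l; lra|].
  assert (ln x < 0) by (rewrite <- ln_1; apply ln_increasing; lra).
  unfold Rpower. rewrite <- exp_0. left. apply exp_increasing. nra.
Qed.

Lemma is_derive_Rpower a t : 0 < t -> is_derive (fun y => Rpower y a) t (a * Rpower t (a - 1)).
Proof. intros Ht. apply is_derive_Reals, derivable_pt_lim_power, Ht. Qed.

Lemma is_derive_Rext (f g : R -> R) t l : (forall y, f y = g y) ->
  is_derive f t l -> is_derive g t l.
Proof. apply is_derive_ext. Qed.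

Lemma is_derive_sum_f_R0 (f : nat -> R -> R) (df : nat -> R) n t :
  (forall k, (k <= n)%nat -> is_derive (f k) t (df k)) ->
  is_derive (fun y => sum_f_R0 (fun k => f k y) n) t (sum_f_R0 df n).
Proof.
  induction n as [|n IH]; intros H; simpl.
  - apply H. lia.
  - apply (is_derive_plus (fun y => sum_f_R0 (fun k => f k y) n) (f (S n))).
    + apply IH. intros k Hk. apply H. lia.
    + apply H. lia.
Qed.

Lemma Rabs_le_of_derive_dominated (F W dF dW : R -> R) a b : a <= b ->
  (forall t, a <= t <= b -> is_derive F t (dF t)) ->
  (forall t, a <= t <= b -> is_derive W t (dW t)) ->
  (forall t, a <= t <= b -> Rabs (dF t) <= - dW t) ->
  Rabs (F b - F a) <= W a - W b.
Proof.
  intros Hab HF HW Hd.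
  (* For s = 1 and s = -1, W + s F is nonincreasing by the mean value theorem. *)
  assert (Hs : forall s, Rabs s = 1 -> s * (F b - F a) <= W a - W b).
  { intros s Hs.
    assert (Hphi : forall t, a <= t <= b ->
      is_derive (fun y => W y + s * F y) t (dW t + s * dF t)).
    { intros t Ht. apply (is_derive_plus W (fun y => s * F y)); [auto|].
      apply is_derive_scal. auto. }
    destruct (MVT_gen (fun y => W y + s * F y) a b (fun t => dW t + s * dF t)) as [c [Hc E]].
    - intros t Ht. rewrite Rmin_left, Rmax_right in Ht by lra. apply Hphi. lra.
    - intros t Ht. rewrite Rmin_left, Rmax_right in Ht by lra.
      apply derivable_continuous_pt. exists (dW t + s * dF t).
      apply is_derive_Reals, Hphi, Ht.
    - rewrite Rmin_left, Rmax_right in Hc by lra.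
      assert (s * dF c <= - dW c).
      { eapply Rle_trans; [apply Rle_abs|]. rewrite Rabs_mult, Hs, Rmult_1_l. auto. }
      cbv beta in E. nra. }
  assert (Hm1 : Rabs (-1) = 1) by (unfold Rabs; destruct Rcase_abs; lra).
  pose proof (Hs 1 Rabs_R1). pose proof (Hs (-1) Hm1). apply Rabs_le. lra.
Qed.

Section MuntzRecursion.
Variable mu : R.
Variable nu : nat -> R.

Definition muntz_exp (i : nat) : R := match i with O => mu | S _ => nu i end.

Definition muntz_ratio (k i : nat) : R := (mu - nu (S k)) / (muntz_exp i - nu (S k)).

(* Q_k = sum_(i <= k) muntz_coef k i * x^(muntz_exp i): the integral operator defining
   Q_(k+1) sends x^beta to (mu - nu)/(beta - nu) * (x^beta - x^nu), nu = nu_(k+1). *)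
Fixpoint muntz_coef (k : nat) : nat -> R :=
  match k with
  | O => fun i => match i with O => 1 | S _ => 0 end
  | S k' => fun i =>
      if (i <=? k')%nat then muntz_coef k' i * muntz_ratio k' i
      else if (i =? S k')%nat then - sum_f_R0 (fun j => muntz_coef k' j * muntz_ratio k' j) k'
      else 0
  end.

Definition muntz_poly (k : nat) (x : R) : R :=
  sum_f_R0 (fun i => muntz_coef k i * xpow (muntz_exp i) x) k.

Fixpoint muntz_prod (k : nat) : R :=
  match k with O => 1 | S k' => muntz_prod k' * Rabs (1 - mu / nu (S k')) end.

Lemma muntz_coef_last k :
  muntz_coef (S k) (S k) = - sum_f_R0 (fun j => muntz_coef k j * muntz_ratio k j) k.
Proof.
  cbn [muntz_coef]. replace (S k <=? k)%nat with false by (symmetry; apply Nat.leb_gt; lia).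
  rewrite Nat.eqb_refl. reflexivity.
Qed.

Lemma muntz_coef_S k i : (i <= k)%nat ->
  muntz_coef (S k) i = muntz_coef k i * muntz_ratio k i.
Proof.
  intros Hi. cbn [muntz_coef].
  replace (i <=? k)%nat with true by (symmetry; apply Nat.leb_le; lia). reflexivity.
Qed.

Lemma muntz_poly_S k x : muntz_poly (S k) x =
  sum_f_R0 (fun i => muntz_coef k i * muntz_ratio k i *
                     (xpow (muntz_exp i) x - xpow (nu (S k)) x)) k.
Proof.
  unfold muntz_poly. rewrite tech5, muntz_coef_last.
  rewrite (sum_eq _ (fun i => muntz_coef k i * muntz_ratio k i * xpow (muntz_exp i) x))
    by (intros i Hi; rewrite muntz_coef_S by auto; reflexivity).
  rewrite (sum_eq (fun i => muntz_coef k i * muntz_ratio k i *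
                            (xpow (muntz_exp i) x - xpow (nu (S k)) x))
                  (fun i => muntz_coef k i * muntz_ratio k i * xpow (muntz_exp i) x -
                            muntz_coef k i * muntz_ratio k i * xpow (nu (S k)) x))
    by (intros; ring).
  rewrite minus_sum, <- scal_sum. simpl muntz_exp. ring.
Qed.

Hypothesis mu_pos : 0 < mu.
Hypothesis nu_pos : forall k, (1 <= k)%nat -> 0 < nu k.
Hypothesis nu_neq_mu : forall k, (1 <= k)%nat -> nu k <> mu.
Hypothesis nu_inj : forall i j, (1 <= i)%nat -> (1 <= j)%nat -> i <> j -> nu i <> nu j.

Lemma muntz_exp_neq k i : (i <= k)%nat -> muntz_exp i - nu (S k) <> 0.
Proof.
  intros Hi E. destruct i as [|i]; simpl in E.
  - apply (nu_neq_mu (S k)); [lia | lra].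
  - apply (nu_inj (S i) (S k)); [lia | lia | lia | lra].
Qed.

Lemma muntz_coef_0 k : muntz_coef k 0 = 1.
Proof.
  induction k as [|k IH]; [reflexivity|].
  rewrite muntz_coef_S, IH by lia. unfold muntz_ratio. simpl. field.
  apply (muntz_exp_neq k 0). lia.
Qed.

Lemma muntz_ratio_mul k i : (i <= k)%nat ->
  muntz_ratio k i * (muntz_exp i - nu (S k)) = mu - nu (S k).
Proof. intros Hi. unfold muntz_ratio. field. apply muntz_exp_neq, Hi. Qed.

Definition muntz_quot (k : nat) (t : R) : R :=
  sum_f_R0 (fun i => muntz_coef k i * muntz_ratio k i *
                     (Rpower t (muntz_exp i - nu (S k)) - 1)) k.

Lemma muntz_poly_S_quot k t : 0 < t ->
  muntz_poly (S k) t = Rpower t (nu (S k)) * muntz_quot k t.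
Proof.
  intros Ht. rewrite muntz_poly_S. unfold muntz_quot. rewrite scal_sum.
  apply sum_eq. intros i Hi. rewrite !xpow_pos by exact Ht.
  replace (muntz_exp i) with (nu (S k) + (muntz_exp i - nu (S k))) at 1 by ring.
  rewrite Rpower_plus. ring.
Qed.

Lemma muntz_quot_1 k : muntz_quot k 1 = 0.
Proof.
  unfold muntz_quot. rewrite (sum_eq _ (fun _ => 0)) by (intros; rewrite Rpower_1_l; ring).
  rewrite sum_cte. ring.
Qed.

Lemma is_derive_muntz_quot k t : 0 < t -> is_derive (muntz_quot k) t
  ((mu - nu (S k)) * Rpower t (- nu (S k) - 1) * muntz_poly k t).
Proof.
  intros Ht. set (v := nu (S k)).
  replace ((mu - v) * Rpower t (- v - 1) * muntz_poly k t) with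
    (sum_f_R0 (fun i => muntz_coef k i * muntz_ratio k i *
       ((muntz_exp i - v) * Rpower t (muntz_exp i - v - 1) + 0)) k).
  - apply is_derive_sum_f_R0. intros i Hi. apply is_derive_scal.
    apply (is_derive_plus (fun y => Rpower y (muntz_exp i - v)) (fun _ => -1)).
    + apply is_derive_Rpower, Ht.
    + exact (@is_derive_const R_AbsRing R_NormedModule (-1) t).
  - unfold muntz_poly. rewrite scal_sum. apply sum_eq. intros i Hi.
    rewrite xpow_pos by exact Ht.
    replace (muntz_exp i - v - 1) with ((- v - 1) + muntz_exp i) by ring.
    rewrite Rpower_plus.
    replace (muntz_coef k i * muntz_ratio k i * ((muntz_exp i - v) *
               (Rpower t (- v - 1) * Rpower t (muntz_exp i)) + 0))
      with (muntz_coef k i * (muntz_ratio k i * (muntz_exp i - nu (S k))) *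
              Rpower t (- v - 1) * Rpower t (muntz_exp i)) by (unfold v; ring).
    rewrite muntz_ratio_mul by exact Hi. unfold v. ring.
Qed.

Lemma muntz_quot_bound k M x : 0 <= M ->
  (forall t, 0 <= t <= 1 -> Rabs (muntz_poly k t) <= M) -> 0 < x <= 1 ->
  Rabs (muntz_quot k x) <= Rabs (mu - nu (S k)) * M * (Rpower x (- nu (S k)) - 1) / nu (S k).
Proof.
  intros HM HQ Hx. set (v := nu (S k)).
  assert (Hv : 0 < v) by (apply nu_pos; lia).
  set (W := fun t => Rabs (mu - v) * M * (Rpower t (- v) - 1) / v).
  change (Rabs (muntz_quot k x) <= W x).
  replace (W x) with (W x - W 1) by (unfold W; rewrite Rpower_1_l; unfold Rdiv; ring).
  replace (Rabs (muntz_quot k x)) with (Rabs (muntz_quot k 1 - muntz_quot k x))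
    by (rewrite muntz_quot_1, Rminus_0_l, Rabs_Ropp; reflexivity).
  apply (Rabs_le_of_derive_dominated _ W
    (fun t => (mu - v) * Rpower t (- v - 1) * muntz_poly k t)
    (fun t => - Rabs (mu - v) * M * Rpower t (- v - 1))); [lra | | |].
  - intros t Ht. apply is_derive_muntz_quot. lra.
  - intros t Ht. unfold W.
    apply (is_derive_Rext (fun y => (Rabs (mu - v) * M / v) * (Rpower y (- v) + -1)));
      [intros y; unfold Rdiv; ring|].
    replace (- Rabs (mu - v) * M * Rpower t (- v - 1)) with
      ((Rabs (mu - v) * M / v) * (- v * Rpower t (- v - 1) + 0)) by (field; lra).
    apply is_derive_scal, (is_derive_plus (fun y => Rpower y (- v)) (fun _ => -1)).
    + apply is_derive_Rpower. lra.
    + exact (@is_derive_const R_AbsRing R_NormedModule (-1) t).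
  - intros t Ht.
    rewrite !Rabs_mult, (Rabs_pos_eq (Rpower t _)) by (left; apply Rpower_pos).
    pose proof (HQ t ltac:(lra)).
    assert (0 <= Rabs (mu - v) * Rpower t (- v - 1))
      by (apply Rmult_le_pos; [apply Rabs_pos | left; apply Rpower_pos]).
    nra.
Qed.

Lemma muntz_poly_S_bound k M : 0 <= M ->
  (forall x, 0 <= x <= 1 -> Rabs (muntz_poly k x) <= M) ->
  forall x, 0 <= x <= 1 -> Rabs (muntz_poly (S k) x) <= Rabs (1 - mu / nu (S k)) * M.
Proof.
  intros HM HQ x Hx. set (v := nu (S k)).
  assert (Hv : 0 < v) by (apply nu_pos; lia).
  assert (HK : 0 <= Rabs (1 - mu / v) * M) by (apply Rmult_le_pos; [apply Rabs_pos | exact HM]).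
  destruct (Req_dec x 0) as [->|Hx0].
  { rewrite muntz_poly_S, (sum_eq _ (fun _ => 0)) by (intros; rewrite !xpow_0; ring).
    rewrite sum_cte, Rmult_0_l, Rabs_R0. exact HK. }
  rewrite muntz_poly_S_quot, Rabs_mult, (Rabs_pos_eq (Rpower x _))
    by (lra || (left; apply Rpower_pos)).
  pose proof (Rpower_pos x v).
  apply Rle_trans with (Rpower x v * (Rabs (mu - v) * M * (Rpower x (- v) - 1) / v)).
  { apply Rmult_le_compat_l; [lra|]. apply muntz_quot_bound; [exact HM | exact HQ | lra]. }
  replace (Rpower x v * (Rabs (mu - v) * M * (Rpower x (- v) - 1) / v)) with
    (Rabs (1 - mu / v) * M * (1 - Rpower x v)).
  { nra. }
  replace (1 - mu / v) with ((v - mu) / v) by (field; lra).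
  rewrite Rabs_div, (Rabs_pos_eq v), (Rabs_minus_sym v mu) by lra.
  replace (Rpower x v * (Rabs (mu - v) * M * (Rpower x (- v) - 1) / v)) with
    (Rabs (mu - v) / v * M * (Rpower x v * Rpower x (- v) - Rpower x v)) by (field; lra).
  rewrite <- Rpower_plus, Rplus_opp_r, Rpower_O by lra. ring.
Qed.

Lemma muntz_prod_nonneg k : 0 <= muntz_prod k.
Proof.
  induction k as [|k IH]; simpl; [lra|]. apply Rmult_le_pos; [exact IH | apply Rabs_pos].
Qed.

Lemma muntz_poly_bound k x : 0 <= x <= 1 -> Rabs (muntz_poly k x) <= muntz_prod k.
Proof.
  revert x. induction k as [|k IH]; intros x Hx.
  - unfold muntz_poly. simpl. rewrite Rmult_1_l.
    pose proof (xpow_unit mu x mu_pos Hx). rewrite Rabs_pos_eq; lra.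
  - simpl muntz_prod. rewrite Rmult_comm.
    apply muntz_poly_S_bound; [apply muntz_prod_nonneg | exact IH | exact Hx].
Qed.

Lemma muntz_closure_of_prod_small lam :
  (forall k, (1 <= k)%nat -> in_muntz_closure lam (xpow (nu k))) ->
  (forall eps, 0 < eps -> exists K, muntz_prod K < eps) ->
  in_muntz_closure lam (xpow mu).
Proof.
  intros Hnu Hprod. apply muntz_closure_closed. intros eps Heps.
  destruct (Hprod eps Heps) as [K HK].
  set (g := fun i x => match i with
                       | O => 0
                       | S _ => - muntz_coef K i * xpow (nu i) x end).
  exists (fun x => sum_f_R0 (fun i => g i x) K). split.
  - apply muntz_closure_sum. intros [|i] Hi; unfold g.
    + apply muntz_closure_of_span, muntz_span_const.
    + apply muntz_closure_scale, Hnu. lia.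
  - intros x Hx. eapply Rle_lt_trans; [|exact HK].
    replace (xpow mu x - sum_f_R0 (fun i => g i x) K) with (muntz_poly K x);
      [apply muntz_poly_bound, Hx|].
    assert (Hfirst : forall n, sum_f_R0 (fun i => match i with O => xpow mu x | S _ => 0 end) n
                               = xpow mu x) by (induction n; simpl; [|rewrite IHn]; ring).
    unfold muntz_poly. rewrite <- (Hfirst K) at 1. rewrite <- minus_sum. apply sum_eq.
    intros [|i] _; unfold g; simpl; [rewrite muntz_coef_0|]; ring.
Qed.

End MuntzRecursion.

Lemma muntz_prod_le_pow mu nu r : 0 <= r ->
  (forall k, (1 <= k)%nat -> Rabs (1 - mu / nu k) <= r) ->
  forall K, muntz_prod mu nu K <= r ^ K.
Proof.
  intros Hr H K. induction K as [|K IH]; simpl; [lra|].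
  rewrite Rmult_comm.
  apply Rmult_le_compat; [apply Rabs_pos | apply muntz_prod_nonneg | | exact IH].
  apply H. lia.
Qed.

Lemma muntz_prod_le_exp mu nu : (forall k, (1 <= k)%nat -> 0 < mu / nu k <= 1) ->
  forall K, muntz_prod mu nu K <= exp (- mu * sum_n_m (fun i => / nu i) 1 K).
Proof.
  intros H K. induction K as [|K IH].
  - simpl. rewrite sum_n_m_zero by lia. change zero with 0. rewrite Rmult_0_r, exp_0. lra.
  - simpl muntz_prod. rewrite sum_n_Sm by lia. change plus with Rplus. cbv beta.
    replace (- mu * (sum_n_m (fun i => / nu i) 1 K + / nu (S K))) with
      (- mu * sum_n_m (fun i => / nu i) 1 K + - (mu / nu (S K))) by (unfold Rdiv; ring).
    rewrite exp_plus. apply Rmult_le_compat; [apply muntz_prod_nonneg | apply Rabs_pos | exact IH|].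
    specialize (H (S K) ltac:(lia)). rewrite Rabs_pos_eq by lra.
    pose proof (exp_ineq1_le (- (mu / nu (S K)))). lra.
Qed.

Section Muntz.
Variable lam : nat -> R.
Hypothesis lam_pos : forall i : nat, (1 <= i)%nat -> 0 < lam i.
Hypothesis lam_inj : forall i j : nat, (1 <= i)%nat -> (1 <= j)%nat -> i <> j -> lam i <> lam j.
Variable d : R.
Hypothesis d_pos : 0 < d.
Hypothesis d_le_lam : forall i : nat, (1 <= i)%nat -> d <= lam i.
Hypothesis lam_inv_div : is_lim_seq (fun m => sum_n_m (fun i => / lam i) 1 m) p_infty.

Lemma muntz_closure_xpow_lt mu : 0 < mu < d -> in_muntz_closure lam (xpow mu).
Proof.
  intros Hmu. apply (muntz_closure_of_prod_small mu lam); try lra.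
  - exact lam_pos.
  - intros k Hk. specialize (d_le_lam k Hk). lra.
  - exact lam_inj.
  - intros k Hk. apply muntz_closure_of_span, muntz_span_xpow, Hk.
  - intros eps Heps.
    apply is_lim_seq_spec in lam_inv_div.
    destruct (lam_inv_div (- ln eps / mu)) as [K HK].
    exists K. eapply Rle_lt_trans; [apply muntz_prod_le_exp|].
    + intros k Hk. specialize (d_le_lam k Hk). specialize (lam_pos k Hk).
      split; [apply Rdiv_lt_0_compat; lra|].
      apply Rmult_le_reg_r with (lam k); [lra|].
      unfold Rdiv. rewrite Rmult_assoc, Rinv_l by lra. lra.
    + specialize (HK K (le_n K)).
      rewrite <- (exp_ln eps) by exact Heps. apply exp_increasing.
      apply (Rmult_lt_compat_l mu) in HK; [|lra].
      replace (mu * (- ln eps / mu)) with (- ln eps) in HK by (field; lra). lra.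
Qed.

(* The exponents a - a/(8(k+1)) lie in [15a/16, a), so for a <= mu < 3a/2 every
   factor |1 - mu/nu_k| is at most 3/5. *)
Lemma muntz_closure_xpow_extend a : 0 < a ->
  (forall v, 0 < v < a -> in_muntz_closure lam (xpow v)) ->
  forall mu, 0 < mu < 3 * a / 2 -> in_muntz_closure lam (xpow mu).
Proof.
  intros Ha H mu Hmu.
  destruct (Rlt_dec mu a) as [Hlt|Hge]; [apply H; lra|].
  set (nu := fun k : nat => a - a / (8 * (INR k + 1))).
  assert (Hnu : forall k, (1 <= k)%nat -> 15 * a / 16 <= nu k < a).
  { intros k Hk. unfold nu. assert (1 <= INR k) by (apply (le_INR 1); lia).
    assert (0 < a / (8 * (INR k + 1))) by (apply Rdiv_lt_0_compat; lra).
    assert (a / (8 * (INR k + 1)) <= a / 16).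
    { unfold Rdiv. apply Rmult_le_compat_l; [lra|]. apply Rinv_le_contravar; lra. }
    lra. }
  apply (muntz_closure_of_prod_small mu nu); try lra.
  - intros k Hk. specialize (Hnu k Hk). lra.
  - intros k Hk. specialize (Hnu k Hk). lra.
  - intros i j Hi Hj Hij E. apply Hij, INR_eq. unfold nu in E.
    assert (0 <= INR i) by apply pos_INR. assert (0 <= INR j) by apply pos_INR.
    assert (E2 : / (8 * (INR i + 1)) = / (8 * (INR j + 1))).
    { apply (Rmult_eq_reg_l a); [|lra]. unfold Rdiv in E. lra. }
    apply Rinv_eq_reg in E2. lra.
  - intros k Hk. apply H. specialize (Hnu k Hk). lra.
  - intros eps Heps.
    destruct (pow_lt_1_zero (3/5) ltac:(rewrite Rabs_pos_eq; lra) eps Heps) as [K HK].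
    exists K. eapply Rle_lt_trans; [apply (muntz_prod_le_pow mu nu (3/5)); [lra|]|].
    + intros k Hk. specialize (Hnu k Hk).
      assert (1 <= mu / nu k <= 8 / 5).
      { split; apply Rmult_le_reg_r with (nu k); try lra;
          unfold Rdiv; rewrite Rmult_assoc, Rinv_l by lra; lra. }
      rewrite Rabs_left1 by lra. lra.
    + specialize (HK K (le_n K)). rewrite Rabs_pos_eq in HK by (apply pow_le; lra). exact HK.
Qed.

Theorem muntz_closure_xpow mu : 0 < mu -> in_muntz_closure lam (xpow mu).
Proof.
  intros Hmu.
  assert (Hgeom : forall n mu', 0 < mu' < d * (3/2) ^ n -> in_muntz_closure lam (xpow mu')).
  { induction n as [|n IH]; intros mu' Hmu'; simpl in Hmu'.
    - apply muntz_closure_xpow_lt. lra.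
    - apply (muntz_closure_xpow_extend (d * (3/2) ^ n)); [| exact IH | lra].
      apply Rmult_lt_0_compat; [exact d_pos | apply pow_lt; lra]. }
  destruct (Pow_x_infinity (3/2) ltac:(rewrite Rabs_pos_eq; lra) (mu / d + 1)) as [K HK].
  specialize (HK K (le_n K)). rewrite Rabs_pos_eq in HK by (apply pow_le; lra).
  apply (Hgeom K). split; [exact Hmu|].
  apply (Rmult_lt_reg_r (/ d)); [apply Rinv_0_lt_compat, d_pos|].
  replace (d * (3 / 2) ^ K * / d) with ((3/2) ^ K) by (field; lra).
  unfold Rdiv in HK. lra.
Qed.

Lemma muntz_closure_pow k : in_muntz_closure lam (fun x => x ^ k).
Proof.
  destruct k as [|k].
  - apply (muntz_closure_ext lam (fun _ => 1)); [|intros; reflexivity].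
    apply muntz_closure_of_span, muntz_span_const.
  - apply (muntz_closure_ext lam (xpow (INR (S k)))).
    + apply muntz_closure_xpow, lt_0_INR. lia.
    + intros x Hx. destruct (Req_dec x 0) as [->|Hx0].
      * rewrite xpow_0. simpl. ring.
      * rewrite xpow_pos, Rpower_pow by lra. reflexivity.
Qed.

Lemma muntz_closure_bernstein_basis k l :
  in_muntz_closure lam (fun x => x ^ k * (1 - x) ^ l).
Proof.
  revert k. induction l as [|l IH]; intros k.
  - apply (muntz_closure_ext lam (fun x => x ^ k)); [apply muntz_closure_pow|].
    intros; simpl; ring.
  - apply (muntz_closure_ext lam (fun x => x ^ k * (1 - x) ^ l + (-1) * (x ^ S k * (1 - x) ^ l))).
    + apply muntz_closure_add, muntz_closure_scale; apply IH.
    + intros x Hx. simpl. ring.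
Qed.

End Muntz.

(** * Weierstrass approximation by Bernstein polynomials *)

Definition continuous_01 (f : R -> R) : Prop :=
  forall x, 0 <= x <= 1 -> forall e, 0 < e -> exists d, 0 < d /\
    forall y, 0 <= y <= 1 -> Rabs (y - x) < d -> Rabs (f y - f x) < e.

Definition clamp01 (x : R) : R := Rmax 0 (Rmin 1 x).

Lemma clamp01_unit x : 0 <= clamp01 x <= 1.
Proof. unfold clamp01, Rmax, Rmin. repeat destruct Rle_dec; lra. Qed.

Lemma clamp01_id x : 0 <= x <= 1 -> clamp01 x = x.
Proof. intros. unfold clamp01, Rmax, Rmin. repeat destruct Rle_dec; lra. Qed.

Lemma clamp01_dist x y : 0 <= x <= 1 -> Rabs (clamp01 y - x) <= Rabs (y - x).
Proof.
  intros Hx. unfold clamp01, Rmax, Rmin.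
  repeat destruct Rle_dec; unfold Rabs; repeat destruct Rcase_abs; lra.
Qed.

Lemma continuity_pt_clamp01 f : continuous_01 f ->
  forall x, 0 <= x <= 1 -> continuity_pt (fun y => f (clamp01 y)) x.
Proof.
  intros Hf x Hx e He. destruct (Hf x Hx e He) as [d [Hd H]].
  exists d. split; [exact Hd|]. intros y [_ Hy]. simpl in *. unfold R_dist in *.
  rewrite (clamp01_id x Hx). apply H; [apply clamp01_unit|].
  eapply Rle_lt_trans; [apply clamp01_dist, Hx | exact Hy].
Qed.

Lemma continuous_01_unif f : continuous_01 f -> forall e, 0 < e -> exists d, 0 < d /\
  forall x y, 0 <= x <= 1 -> 0 <= y <= 1 -> Rabs (x - y) < d -> Rabs (f x - f y) < e.
Proof.
  intros Hf e He.
  destruct (Heine (fun y => f (clamp01 y)) (fun c => 0 <= c <= 1) (compact_P3 0 1)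
    (continuity_pt_clamp01 f Hf) (mkposreal e He)) as [d Hd].
  exists d. split; [apply cond_pos|]. intros x y Hx Hy Hxy.
  specialize (Hd x y Hx Hy Hxy). simpl in Hd. rewrite !clamp01_id in Hd by assumption. exact Hd.
Qed.

Lemma continuous_01_bounded f : continuous_01 f ->
  exists B, 0 <= B /\ forall x, 0 <= x <= 1 -> Rabs (f x) <= B.
Proof.
  intros Hf. pose proof (continuity_pt_clamp01 f Hf) as Hc.
  destruct (continuity_ab_maj _ 0 1 ltac:(lra) Hc) as [M [HM _]].
  destruct (continuity_ab_min _ 0 1 ltac:(lra) Hc) as [m [Hm _]].
  exists (Rabs (f (clamp01 M)) + Rabs (f (clamp01 m))).
  split; [pose proof (Rabs_pos (f (clamp01 M))); pose proof (Rabs_pos (f (clamp01 m))); lra|].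
  intros x Hx. specialize (HM x Hx). specialize (Hm x Hx). rewrite (clamp01_id x Hx) in HM, Hm.
  unfold Rabs in *. repeat destruct Rcase_abs; lra.
Qed.

Lemma xpow_continuous_01 a : 0 < a -> continuous_01 (xpow a).
Proof.
  intros Ha x Hx e He.
  destruct (Req_dec x 0) as [->|Hx0].
  - exists (exp (ln e / a)). split; [apply exp_pos|].
    intros y Hy Hyx. rewrite xpow_0, !Rminus_0_r in *.
    destruct (Req_dec y 0) as [->|Hy0]; [rewrite xpow_0, Rabs_R0; exact He|].
    rewrite xpow_pos, Rabs_pos_eq by (lra || (left; apply Rpower_pos)).
    rewrite Rabs_pos_eq in Hyx by lra.
    unfold Rpower. rewrite <- (exp_ln e) by exact He. apply exp_increasing.
    assert (ln y < ln e / a) by (rewrite <- (ln_exp (ln e / a)); apply ln_increasing; lra).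
    apply (Rmult_lt_reg_l (/ a)); [apply Rinv_0_lt_compat, Ha|].
    replace (/ a * (a * ln y)) with (ln y) by (field; lra).
    replace (/ a * ln e) with (ln e / a) by (unfold Rdiv; ring). assumption.
  - assert (Hc : continuity_pt (fun y => Rpower y a) x).
    { apply derivable_continuous_pt. exists (a * Rpower x (a - 1)).
      apply derivable_pt_lim_power. lra. }
    destruct (Hc e He) as [d [Hd H]]. simpl in H. unfold R_dist in H.
    exists (Rmin d x). split; [apply Rmin_pos; lra|].
    intros y Hy Hyx. pose proof (Rmin_l d x). pose proof (Rmin_r d x).
    assert (Hyp : 0 < y) by (apply Rabs_lt_between in Hyx; lra).
    rewrite !xpow_pos by lra.
    destruct (Req_dec y x) as [->|Hne]; [rewrite Rminus_diag, Rabs_R0; exact He|].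
    apply H. split; [split; [exact I | auto] | lra].
Qed.

(* Korovkin's trick: off the d-neighbourhood of x, the oscillation 2B of f is dominated
   by a multiple of (t - x)^2. *)
Lemma unif_cont_sq_bound f B e d : 0 <= e -> 0 < d ->
  (forall x, 0 <= x <= 1 -> Rabs (f x) <= B) ->
  (forall x y, 0 <= x <= 1 -> 0 <= y <= 1 -> Rabs (x - y) < d -> Rabs (f x - f y) < e) ->
  forall t x, 0 <= t <= 1 -> 0 <= x <= 1 ->
  Rabs (f t - f x) <= e + 2 * B / (d * d) * ((t - x) * (t - x)).
Proof.
  intros He Hd Hb Hu t x Ht Hx.
  assert (HB : 0 <= B) by (pose proof (Hb x Hx); pose proof (Rabs_pos (f x)); lra).
  assert (Hsq : 0 <= (t - x) * (t - x)) by apply Rle_0_sqr.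
  assert (Hc : 0 <= 2 * B / (d * d))
    by (apply Rdiv_le_0_compat; [lra | apply Rmult_lt_0_compat; lra]).
  assert (0 <= 2 * B / (d * d) * ((t - x) * (t - x))) by (apply Rmult_le_pos; assumption).
  destruct (Rlt_dec (Rabs (t - x)) d) as [Hl|Hl].
  - specialize (Hu t x Ht Hx Hl). lra.
  - assert (d * d <= (t - x) * (t - x)).
    { replace ((t - x) * (t - x)) with (Rabs (t - x) * Rabs (t - x))
        by (rewrite <- Rabs_mult; apply Rabs_pos_eq, Hsq).
      apply Rmult_le_compat; lra. }
    assert (2 * B <= 2 * B / (d * d) * ((t - x) * (t - x))).
    { replace (2 * B) with (2 * B / (d * d) * (d * d)) at 1 by (field; lra).
      apply Rmult_le_compat_l; assumption. }
    pose proof (Rabs_triang (f t) (- f x)) as Htri. rewrite Rabs_Ropp in Htri.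
    pose proof (Hb t Ht). pose proof (Hb x Hx). unfold Rminus. lra.
Qed.

Lemma sum_f_R0_scal_l (a : nat -> R) c n : sum_f_R0 (fun i => c * a i) n = c * sum_f_R0 a n.
Proof. induction n; simpl; [|rewrite IHn]; ring. Qed.

Lemma C_succ_mul m i : (i <= m)%nat ->
  Binomial.C (S m) (S i) * INR (S i) = INR (S m) * Binomial.C m i.
Proof.
  intros Hi. unfold Binomial.C. replace (S m - S i)%nat with (m - i)%nat by lia.
  rewrite !fact_simpl, !mult_INR. field.
  repeat split; [apply INR_fact_neq_0 | apply INR_fact_neq_0 | apply not_0_INR; lia].
Qed.

Lemma C_nonneg n k : 0 <= Binomial.C n k.
Proof.
  unfold Binomial.C. apply Rdiv_le_0_compat; [apply pos_INR|].
  apply Rmult_lt_0_compat; apply lt_0_INR, lt_O_fact.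
Qed.

Definition bernstein_weight (n : nat) (x : R) (k : nat) : R :=
  Binomial.C n k * x ^ k * (1 - x) ^ (n - k).

Definition bernstein (n : nat) (f : R -> R) (x : R) : R :=
  sum_f_R0 (fun k => bernstein_weight n x k * f (INR k / INR n)) n.

Lemma bernstein_weight_nonneg n x k : 0 <= x <= 1 -> 0 <= bernstein_weight n x k.
Proof.
  intros Hx. unfold bernstein_weight.
  apply Rmult_le_pos; [apply Rmult_le_pos; [apply C_nonneg|] |]; apply pow_le; lra.
Qed.

Lemma bernstein_weight_sum n x : sum_f_R0 (bernstein_weight n x) n = 1.
Proof.
  unfold bernstein_weight. rewrite <- binomial. replace (x + (1 - x)) with 1 by ring. apply pow1.
Qed.

Lemma bernstein_weight_shift m x i : (i <= m)%nat ->
  bernstein_weight (S m) x (S i) * INR (S i) = INR (S m) * x * bernstein_weight m x i.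
Proof.
  intros Hi. unfold bernstein_weight. replace (S m - S i)%nat with (m - i)%nat by lia.
  replace (Binomial.C (S m) (S i) * x ^ S i * (1 - x) ^ (m - i) * INR (S i)) with
    ((Binomial.C (S m) (S i) * INR (S i)) * x ^ S i * (1 - x) ^ (m - i)) by ring.
  rewrite C_succ_mul by exact Hi. simpl. ring.
Qed.

Lemma bernstein_weight_mean n x :
  sum_f_R0 (fun k => bernstein_weight n x k * INR k) n = INR n * x.
Proof.
  destruct n as [|m]; [simpl; ring|].
  rewrite decomp_sum by lia. simpl pred. rewrite Rmult_0_r, Rplus_0_l.
  rewrite (sum_eq _ (fun i => INR (S m) * x * bernstein_weight m x i))
    by (intros; apply bernstein_weight_shift; assumption).
  rewrite sum_f_R0_scal_l, bernstein_weight_sum. ring.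
Qed.

Lemma bernstein_weight_second n x :
  sum_f_R0 (fun k => bernstein_weight n x k * (INR k * INR k)) n =
  INR n * (INR n - 1) * x * x + INR n * x.
Proof.
  destruct n as [|m]; [simpl; ring|].
  rewrite decomp_sum by lia. simpl pred. rewrite Rmult_0_l, Rmult_0_r, Rplus_0_l.
  rewrite (sum_eq _ (fun i => INR (S m) * x * (bernstein_weight m x i * INR i +
                                               bernstein_weight m x i))).
  - rewrite sum_f_R0_scal_l, plus_sum, bernstein_weight_mean, bernstein_weight_sum, S_INR. ring.
  - intros i Hi. rewrite <- Rmult_assoc, bernstein_weight_shift by exact Hi.
    rewrite (S_INR i). ring.
Qed.

Lemma bernstein_variance n x : (1 <= n)%nat -> 0 <= x <= 1 ->
  sum_f_R0 (fun k => bernstein_weight n x k * ((INR k / INR n - x) * (INR k / INR n - x))) n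
  <= / INR n.
Proof.
  intros Hn Hx. assert (Hn' : 0 < INR n) by (apply lt_0_INR; lia).
  rewrite (sum_eq _ (fun k => / (INR n * INR n) * (bernstein_weight n x k * (INR k * INR k)) +
     (- 2 * x / INR n) * (bernstein_weight n x k * INR k) + (x * x) * bernstein_weight n x k))
    by (intros; field; lra).
  rewrite !plus_sum, !sum_f_R0_scal_l.
  rewrite bernstein_weight_second, bernstein_weight_mean, bernstein_weight_sum.
  replace (/ (INR n * INR n) * (INR n * (INR n - 1) * x * x + INR n * x) +
           - 2 * x / INR n * (INR n * x) + x * x * 1) with (x * (1 - x) * / INR n)
    by (field; lra).
  rewrite <- (Rmult_1_l (/ INR n)) at 2.
  apply Rmult_le_compat_r; [left; apply Rinv_0_lt_compat, Hn'| nra].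
Qed.

Lemma bernstein_bound n f B e d : (1 <= n)%nat -> 0 <= e -> 0 < d ->
  (forall x, 0 <= x <= 1 -> Rabs (f x) <= B) ->
  (forall x y, 0 <= x <= 1 -> 0 <= y <= 1 -> Rabs (x - y) < d -> Rabs (f x - f y) < e) ->
  forall x, 0 <= x <= 1 -> Rabs (f x - bernstein n f x) <= e + 2 * B / (d * d) * / INR n.
Proof.
  intros Hn1 He Hd Hb Hu x Hx.
  assert (Hn : 0 < INR n) by (apply lt_0_INR; lia).
  assert (HB : 0 <= B) by (pose proof (Hb x Hx); pose proof (Rabs_pos (f x)); lra).
  set (K := 2 * B / (d * d)).
  assert (HK : 0 <= K) by (apply Rdiv_le_0_compat; [lra | apply Rmult_lt_0_compat; lra]).
  assert (E : f x - bernstein n f x =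
              sum_f_R0 (fun k => bernstein_weight n x k * (f x - f (INR k / INR n))) n).
  { unfold bernstein.
    rewrite (sum_eq (fun k => bernstein_weight n x k * (f x - f (INR k / INR n)))
                    (fun k => f x * bernstein_weight n x k -
                              bernstein_weight n x k * f (INR k / INR n))) by (intros; ring).
    rewrite minus_sum, sum_f_R0_scal_l, bernstein_weight_sum. ring. }
  rewrite E. eapply Rle_trans; [apply sum_f_R0_triangle|].
  eapply Rle_trans.
  { apply (sum_Rle _ (fun k => e * bernstein_weight n x k +
      K * (bernstein_weight n x k * ((INR k / INR n - x) * (INR k / INR n - x))))).
    intros k Hk. pose proof (bernstein_weight_nonneg n x k Hx).
    rewrite Rabs_mult, Rabs_pos_eq, Rabs_minus_sym by assumption.
    assert (Hkn : 0 <= INR k / INR n <= 1).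
    { split; [apply Rdiv_le_0_compat; [apply pos_INR | exact Hn]|].
      apply (Rmult_le_reg_r (INR n)); [exact Hn|].
      unfold Rdiv. rewrite Rmult_assoc, Rinv_l, Rmult_1_r, Rmult_1_l by lra.
      apply le_INR, Hk. }
    pose proof (unif_cont_sq_bound f B e d He Hd Hb Hu _ x Hkn Hx) as Hsq.
    fold K in Hsq. nra. }
  rewrite plus_sum, !sum_f_R0_scal_l, bernstein_weight_sum.
  pose proof (Rmult_le_compat_l K _ _ HK (bernstein_variance n x Hn1 Hx)). lra.
Qed.

Lemma INR_inv_small K eps : 0 < eps -> exists n, (1 <= n)%nat /\ K * / INR n < eps.
Proof.
  intros Heps. destruct (INR_unbounded (K / eps)) as [n0 Hn0].
  exists (S n0). split; [lia|].
  assert (Hn : 0 < INR (S n0)) by (apply lt_0_INR; lia).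
  apply (Rmult_lt_reg_r (INR (S n0))); [exact Hn|].
  rewrite Rmult_assoc, Rinv_l, Rmult_1_r by lra. rewrite S_INR.
  apply (Rmult_lt_compat_l eps) in Hn0; [|exact Heps].
  replace (eps * (K / eps)) with K in Hn0 by (field; lra). nra.
Qed.

Theorem bernstein_approx f : continuous_01 f -> forall eps, 0 < eps ->
  exists n, forall x, 0 <= x <= 1 -> Rabs (f x - bernstein n f x) < eps.
Proof.
  intros Hf eps Heps.
  destruct (continuous_01_bounded f Hf) as [B [HB Hb]].
  destruct (continuous_01_unif f Hf (eps / 2)) as [d [Hd Hu]]; [lra|].
  destruct (INR_inv_small (2 * B / (d * d)) (eps / 2)) as [n [Hn HnK]]; [lra|].
  exists n. intros x Hx.
  pose proof (bernstein_bound n f B (eps / 2) d Hn ltac:(lra) Hd Hb Hu x Hx). lra.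
Qed.

Lemma muntz_closure_bernstein lam f n :
  (forall i : nat, (1 <= i)%nat -> 0 < lam i) ->
  (forall i j : nat, (1 <= i)%nat -> (1 <= j)%nat -> i <> j -> lam i <> lam j) ->
  (exists d : R, 0 < d /\ forall i : nat, (1 <= i)%nat -> d <= lam i) ->
  is_lim_seq (fun m => sum_n_m (fun i => / lam i) 1 m) p_infty ->
  in_muntz_closure lam (bernstein n f).
Proof.
  intros Hpos Hinj [d [Hd Hdle]] Hdiv. apply muntz_closure_sum. intros k Hk.
  apply (muntz_closure_ext lam
    (fun x => (Binomial.C n k * f (INR k / INR n)) * (x ^ k * (1 - x) ^ (n - k)))).
  - apply muntz_closure_scale, (muntz_closure_bernstein_basis lam Hpos Hinj d Hd Hdle Hdiv).
  - intros x Hx. unfold bernstein_weight. ring.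
Qed.

Theorem muntz_closure_continuous lam f :
  (forall i : nat, (1 <= i)%nat -> 0 < lam i) ->
  (forall i j : nat, (1 <= i)%nat -> (1 <= j)%nat -> i <> j -> lam i <> lam j) ->
  (exists d : R, 0 < d /\ forall i : nat, (1 <= i)%nat -> d <= lam i) ->
  is_lim_seq (fun m => sum_n_m (fun i => / lam i) 1 m) p_infty ->
  continuous_01 f -> in_muntz_closure lam f.
Proof.
  intros Hpos Hinj Hinf Hdiv Hf. apply muntz_closure_closed. intros eps Heps.
  destruct (bernstein_approx f Hf eps Heps) as [n Hn].
  exists (bernstein n f). split; [apply muntz_closure_bernstein|]; assumption.
Qed.

(** * The quantum MKZ operator *)

Lemma ex_series_Rscal c (a : nat -> R) : ex_series a -> ex_series (fun k => c * a k).
Proof. exact (ex_series_scal_l c a). Qed.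

Lemma ex_series_Rplus (a b : nat -> R) : ex_series a -> ex_series b ->
  ex_series (fun k => a k + b k).
Proof. exact (ex_series_plus a b). Qed.

Lemma ex_series_Rext (a b : nat -> R) : (forall k, a k = b k) -> ex_series a -> ex_series b.
Proof. exact (ex_series_ext a b). Qed.

Lemma ex_series_bounded_mult (w g : nat -> R) C : (forall k, 0 <= w k) ->
  (forall k, Rabs (g k) <= C) -> ex_series w -> ex_series (fun k => w k * g k).
Proof.
  intros Hw Hg Hex. apply (ex_series_le (V := R_CompleteNormedModule) _ (fun k => C * w k)).
  - intros k. change norm with Rabs. rewrite Rabs_mult, Rabs_pos_eq, Rmult_comm by apply Hw.
    apply Rmult_le_compat_r; [apply Hw | apply Hg].
  - apply ex_series_Rscal, Hex.
Qed.

Lemma Series_nonneg (a : nat -> R) : (forall k, 0 <= a k) -> ex_series a -> 0 <= Series a.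
Proof.
  intros H Hex. replace 0 with (Series (fun k => 0 * a k)) by (rewrite Series_scal_l; ring).
  apply Series_le; [|exact Hex]. intros k. rewrite Rmult_0_l. split; [lra | apply H].
Qed.

Lemma Series_Rle (a b : nat -> R) : (forall k, a k <= b k) -> ex_series a -> ex_series b ->
  Series a <= Series b.
Proof.
  intros H Ha Hb.
  assert (0 <= Series (fun k => b k - a k)).
  { apply Series_nonneg.
    - intros k. specialize (H k). lra.
    - apply (ex_series_Rext (fun k => b k + (-1) * a k)); [intros; ring|].
      apply ex_series_Rplus, ex_series_Rscal; assumption. }
  rewrite Series_minus in H0 by assumption. lra.
Qed.

Lemma sum_f_R0_le_Series (a : nat -> R) K : (forall k, 0 <= a k) -> ex_series a ->
  sum_f_R0 a K <= Series a.
Proof.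
  intros H Hex. rewrite (Series_incr_n a (S K)) by (assumption || lia). simpl pred.
  assert (0 <= Series (fun k => a (S K + k)%nat)); [|lra].
  apply Series_nonneg; [intros; apply H|]. apply ex_series_incr_n, Hex.
Qed.

Lemma ex_series_of_partial_bounded (a : nat -> R) B : (forall k, 0 <= a k) ->
  (forall K, sum_f_R0 a K <= B) -> ex_series a.
Proof.
  intros Hp Hb.
  destruct (ex_finite_lim_seq_incr (sum_n a) B) as [l Hl].
  - intros n. rewrite sum_Sn. change (plus (sum_n a n) (a (S n))) with (sum_n a n + a (S n)).
    specialize (Hp (S n)). lra.
  - intros n. rewrite sum_n_Reals. apply Hb.
  - exists l. exact Hl.
Qed.

Lemma qint_0 q : qint q 0 = 0.
Proof. unfold qint. destruct (Req_EM_T q 1); simpl; [|unfold Rdiv]; ring. Qed.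

Lemma qint_S q k : qint q (S k) = 1 + q * qint q k.
Proof.
  unfold qint. destruct (Req_EM_T q 1) as [->|Hq].
  - rewrite S_INR. ring.
  - simpl. field. intros E. apply Hq. lra.
Qed.

Lemma qint_add q a b : qint q (a + b) = qint q a + q ^ a * qint q b.
Proof.
  induction a as [|a IH]; cbn [Nat.add].
  - rewrite qint_0. simpl. ring.
  - rewrite !qint_S, IH. simpl. ring.
Qed.

Lemma qint_nonneg q k : 0 < q -> 0 <= qint q k.
Proof. intros Hq. induction k; [rewrite qint_0 | rewrite qint_S]; nra. Qed.

Lemma qint_pos q k : 0 < q -> (1 <= k)%nat -> 0 < qint q k.
Proof.
  intros Hq Hk. destruct k as [|k]; [lia|].
  rewrite qint_S. pose proof (qint_nonneg q k Hq). nra.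
Qed.

Lemma qint_le q a b : 0 < q -> (a <= b)%nat -> qint q a <= qint q b.
Proof.
  intros Hq Hab. replace b with (a + (b - a))%nat by lia. rewrite qint_add.
  pose proof (qint_nonneg q (b - a) Hq). pose proof (pow_le q a ltac:(lra)). nra.
Qed.

Lemma qint_ge_mul_pow q K : 0 < q <= 1 -> INR K * q ^ K <= qint q K.
Proof.
  intros Hq. induction K as [|K IH]; [rewrite qint_0; simpl; lra|].
  rewrite qint_S, S_INR. simpl.
  assert (q ^ K <= 1) by (rewrite <- (pow1 K); apply pow_incr; lra).
  pose proof (pow_le q K ltac:(lra)). nra.
Qed.

Lemma pow_ge_1_sub q K : 0 <= q <= 1 -> 1 - INR K * (1 - q) <= q ^ K.
Proof.
  intros Hq. induction K as [|K IH]; [simpl; lra|].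
  rewrite S_INR. simpl.
  assert (q * (1 - INR K * (1 - q)) <= q * q ^ K) by (apply Rmult_le_compat_l; lra).
  pose proof (pos_INR K). assert (0 <= INR K * ((1 - q) * (1 - q))) by (apply Rmult_le_pos; nra).
  nra.
Qed.

(* For K <= n, [n+1]_q >= [K]_q >= K q^K >= K (1 - K (1 - q)) >= K/2 once 1 - q <= 1/(2K). *)
Lemma qint_unbounded (q : nat -> R) :
  (forall n : nat, (1 <= n)%nat -> 0 < q n <= 1) -> is_lim_seq q 1 ->
  forall M, exists N, forall n, (N <= n)%nat -> M <= qint (q n) (S n).
Proof.
  intros Hq Hlim M.
  destruct (INR_unbounded (2 * M)) as [K0 HK0].
  set (K := S K0).
  assert (HK : 0 < INR K) by (apply lt_0_INR; unfold K; lia).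
  assert (HKM : 2 * M <= INR K) by (unfold K; rewrite S_INR; lra).
  apply is_lim_seq_spec in Hlim.
  destruct (Hlim (mkposreal (/ (2 * INR K)) ltac:(apply Rinv_0_lt_compat; lra))) as [N1 HN1].
  exists (max N1 K). intros n Hn.
  specialize (Hq n ltac:(unfold K in Hn; lia)). specialize (HN1 n ltac:(lia)).
  assert (H1q : 1 - q n <= / (2 * INR K))
    by (change (Rabs (q n - 1) < / (2 * INR K)) in HN1; apply Rabs_lt_between in HN1; lra).
  eapply Rle_trans; [|apply (qint_le (q n) K (S n)); [lra | lia]].
  eapply Rle_trans; [|apply qint_ge_mul_pow; lra].
  pose proof (pow_ge_1_sub (q n) K ltac:(lra)).
  assert (INR K * (1 - q n) <= / 2).
  { apply Rle_trans with (INR K * / (2 * INR K)); [apply Rmult_le_compat_l; lra|].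
    right. field. lra. }
  assert (INR K / 2 <= INR K * q n ^ K) by nra.
  lra.
Qed.

Lemma qfact_pos q n : 0 < q -> 0 < qfact q n.
Proof.
  intros Hq. induction n; simpl; [lra|].
  apply Rmult_lt_0_compat; [exact IHn | apply qint_pos; [exact Hq | lia]].
Qed.

Lemma qbinom_add q n k : qbinom q (n + k) k = qfact q (n + k) / (qfact q k * qfact q n).
Proof. unfold qbinom. replace (n + k - k)%nat with n by lia. reflexivity. Qed.

Lemma qbinom_pos q n k : 0 < q -> 0 < qbinom q (n + k) k.
Proof.
  intros Hq. rewrite qbinom_add. apply Rdiv_lt_0_compat; [apply qfact_pos, Hq|].
  apply Rmult_lt_0_compat; apply qfact_pos, Hq.
Qed.

Lemma qbinom_k0 q n : 0 < q -> qbinom q (n + 0) 0 = 1.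
Proof.
  intros Hq. rewrite qbinom_add, Nat.add_0_r. simpl.
  pose proof (qfact_pos q n Hq). field. lra.
Qed.

Lemma qbinom_0k q k : 0 < q -> qbinom q (0 + k) k = 1.
Proof. intros Hq. rewrite qbinom_add. simpl. pose proof (qfact_pos q k Hq). field. lra. Qed.

Lemma qbinom_pascal q n k : 0 < q ->
  qbinom q (S n + S k) (S k) = qbinom q (n + S k) (S k) + q ^ S n * qbinom q (S n + k) k.
Proof.
  intros Hq. rewrite !qbinom_add.
  replace (S n + S k)%nat with (S (n + S k)) by lia.
  replace (S n + k)%nat with (n + S k)%nat by lia.
  simpl qfact.
  replace (qint q (S (n + S k))) with (qint q (S n) + q ^ S n * qint q (S k))
    by (rewrite <- qint_add; f_equal; lia).
  assert (0 < qfact q n) by (apply qfact_pos; auto).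
  assert (0 < qfact q k) by (apply qfact_pos; auto).
  assert (0 < qint q (S n)) by (apply qint_pos; auto; lia).
  assert (0 < qint q (S k)) by (apply qint_pos; auto; lia).
  field. repeat split; lra.
Qed.

Lemma qbinom_shift q n k : 0 < q ->
  qbinom q (n + S k) (S k) * (qint q (S k) / qint q (S k + n)) = qbinom q (n + k) k.
Proof.
  intros Hq. rewrite !qbinom_add.
  replace (n + S k)%nat with (S (n + k)) by lia.
  replace (S k + n)%nat with (S (n + k)) by lia.
  simpl qfact.
  assert (0 < qfact q (n + k)) by (apply qfact_pos; auto).
  assert (0 < qfact q n) by (apply qfact_pos; auto).
  assert (0 < qfact q k) by (apply qfact_pos; auto).
  assert (0 < qint q (S (n + k))) by (apply qint_pos; auto; lia).
  assert (0 < qint q (S k)) by (apply qint_pos; auto; lia).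
  field. repeat split; lra.
Qed.

Lemma qprod_pos q n x : 0 < q <= 1 -> 0 <= x < 1 -> 0 < qprod q n x.
Proof.
  intros Hq Hx. induction n; simpl; [lra|].
  apply Rmult_lt_0_compat; [exact IHn|].
  assert (q ^ n <= 1) by (rewrite <- (pow1 n); apply pow_incr; lra).
  pose proof (pow_le q n ltac:(lra)).
  assert (q * q ^ n <= 1) by nra. nra.
Qed.

Lemma qprod_at_0 q n : qprod q n 0 = 1.
Proof. induction n; simpl; [|rewrite IHn]; ring. Qed.

Definition mkz_weight (q : R) (n : nat) (x : R) (k : nat) : R := qbinom q (n + k) k * x ^ k.

Definition mkz_node (q : R) (n k : nat) : R := qint q k / qint q (k + n).

Lemma MKZ_lt_1 q n h x : x < 1 ->
  MKZ q n h x = qprod q n x * Series (fun k => mkz_weight q n x k * h (mkz_node q n k)).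
Proof. intros Hx. unfold MKZ. destruct (Rlt_dec x 1); [reflexivity | lra]. Qed.

Lemma MKZ_at_1 q n h : MKZ q n h 1 = h 1.
Proof. unfold MKZ. destruct (Rlt_dec 1 1); [lra | reflexivity]. Qed.

Lemma mkz_weight_nonneg q n x k : 0 < q -> 0 <= x -> 0 <= mkz_weight q n x k.
Proof.
  intros Hq Hx. apply Rmult_le_pos; [left; apply qbinom_pos, Hq | apply pow_le, Hx].
Qed.

Lemma mkz_weight_0 q n x : 0 < q -> mkz_weight q n x 0 = 1.
Proof. intros Hq. unfold mkz_weight. rewrite qbinom_k0 by exact Hq. ring. Qed.



Lemma mkz_weight_pascal q n x k : 0 < q ->
  mkz_weight q (S n) x (S k) = mkz_weight q n x (S k) + q ^ S n * x * mkz_weight q (S n) x k.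
Proof. intros Hq. unfold mkz_weight. rewrite qbinom_pascal by exact Hq. simpl. ring. Qed.

Lemma mkz_node_0 q n : mkz_node q n 0 = 0.
Proof. unfold mkz_node. rewrite qint_0. unfold Rdiv. ring. Qed.

Lemma sum_mkz_weight_S q n x K : 0 < q ->
  sum_f_R0 (mkz_weight q (S n) x) (S K) =
  sum_f_R0 (mkz_weight q n x) (S K) + q ^ S n * x * sum_f_R0 (mkz_weight q (S n) x) K.
Proof.
  intros Hq. rewrite (decomp_sum (mkz_weight q (S n) x)), (decomp_sum (mkz_weight q n x)) by lia.
  simpl pred. rewrite !mkz_weight_0 by exact Hq.
  rewrite (sum_eq (fun k => mkz_weight q (S n) x (S k))
    (fun k => mkz_weight q n x (S k) + q ^ S n * x * mkz_weight q (S n) x k))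
    by (intros; apply mkz_weight_pascal, Hq).
  rewrite plus_sum, sum_f_R0_scal_l. ring.
Qed.

Lemma mkz_weight_series_S q n x : 0 < q <= 1 -> 0 <= x < 1 -> ex_series (mkz_weight q n x) ->
  ex_series (mkz_weight q (S n) x) /\
  (1 - q ^ S n * x) * Series (mkz_weight q (S n) x) = Series (mkz_weight q n x).
Proof.
  intros Hq Hx Hex. set (r := q ^ S n * x).
  assert (Hr : 0 <= r < 1).
  { assert (q ^ S n <= 1) by (rewrite <- (pow1 (S n)); apply pow_incr; lra).
    pose proof (pow_le q (S n) ltac:(lra)). unfold r. split; nra. }
  assert (Hnn : forall m k, 0 <= mkz_weight q m x k) by (intros; apply mkz_weight_nonneg; lra).
  assert (HexS : ex_series (mkz_weight q (S n) x)).
  { apply (ex_series_of_partial_bounded _ (Series (mkz_weight q n x) / (1 - r))); [apply Hnn|].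
    intros K. pose proof (sum_mkz_weight_S q n x K ltac:(lra)) as Hs. fold r in Hs.
    assert (sum_f_R0 (mkz_weight q (S n) x) K <= sum_f_R0 (mkz_weight q (S n) x) (S K))
      by (rewrite tech5; specialize (Hnn (S n) (S K)); lra).
    pose proof (sum_f_R0_le_Series (mkz_weight q n x) (S K) (Hnn n) Hex).
    apply (Rmult_le_reg_r (1 - r)); [lra|].
    unfold Rdiv. rewrite Rmult_assoc, Rinv_l by lra. nra. }
  split; [exact HexS|].
  assert (E1 : Series (mkz_weight q (S n) x) =
               1 + Series (fun k => mkz_weight q n x (S k)) + r * Series (mkz_weight q (S n) x)).
  { rewrite (Series_incr_1 (mkz_weight q (S n) x)) at 1 by exact HexS.
    rewrite mkz_weight_0 by lra.
    rewrite (Series_ext _ (fun k => mkz_weight q n x (S k) + r * mkz_weight q (S n) x k))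
      by (intros; apply mkz_weight_pascal; lra).
    rewrite Series_plus, Series_scal_l; [ring | |].
    - exact (proj1 (ex_series_incr_1 (mkz_weight q n x)) Hex).
    - apply ex_series_Rscal, HexS. }
  rewrite (Series_incr_1 (mkz_weight q n x)), mkz_weight_0 by (lra || exact Hex). lra.
Qed.

Lemma mkz_weight_series q n x : 0 < q <= 1 -> 0 <= x < 1 ->
  ex_series (mkz_weight q n x) /\ Series (mkz_weight q n x) = / qprod q n x.
Proof.
  intros Hq Hx. induction n as [|n [IHex IHs]].
  - assert (E : forall k, x ^ k = mkz_weight q 0 x k)
      by (intros k; unfold mkz_weight; rewrite qbinom_0k by lra; ring).
    assert (Hg := is_series_geom x ltac:(rewrite Rabs_pos_eq; lra)).
    split.
    + apply (ex_series_Rext (fun k => x ^ k)); [exact E | exists (/ (1 - x)); exact Hg].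
    + rewrite <- (Series_ext _ _ E). apply is_series_unique. exact Hg.
  - destruct (mkz_weight_series_S q n x Hq Hx IHex) as [Hex E]. split; [exact Hex|].
    pose proof (qprod_pos q n x Hq Hx).
    assert (0 < 1 - q ^ S n * x).
    { assert (q ^ S n <= 1) by (rewrite <- (pow1 (S n)); apply pow_incr; lra).
      pose proof (pow_le q (S n) ltac:(lra)). nra. }
    simpl qprod. replace (1 - q * q ^ n * x) with (1 - q ^ S n * x) by (simpl; ring).
    rewrite Rinv_mult, <- IHs, <- E. field. lra.
Qed.

Lemma MKZ_at_0 q n h : 0 < q <= 1 -> MKZ q n h 0 = h 0.
Proof.
  intros Hq. rewrite MKZ_lt_1, qprod_at_0, Rmult_1_l by lra.
  rewrite (Series_ext _ (fun k => h (mkz_node q n 0) * mkz_weight q n 0 k))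
    by (intros [|k]; unfold mkz_weight; simpl; ring).
  rewrite Series_scal_l, mkz_node_0, (proj2 (mkz_weight_series q n 0 Hq ltac:(lra))), qprod_at_0.
  field.
Qed.

Section MKZMoments.
Variables (q : R) (n : nat) (x : R).
Hypothesis q_range : 0 < q <= 1.
Hypothesis n_pos : (1 <= n)%nat.
Hypothesis x_range : 0 <= x < 1.

Lemma mkz_node_unit k : 0 <= mkz_node q n k <= 1.
Proof.
  unfold mkz_node.
  assert (0 < qint q (k + n)) by (apply qint_pos; [lra | lia]).
  pose proof (qint_nonneg q k ltac:(lra)). pose proof (qint_le q k (k + n) ltac:(lra) ltac:(lia)).
  split; [apply Rdiv_le_0_compat; lra|].
  apply (Rmult_le_reg_r (qint q (k + n))); [lra|].
  unfold Rdiv. rewrite Rmult_assoc, Rinv_l by lra. lra.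
Qed.

Lemma mkz_weight_node k :
  mkz_weight q n x (S k) * mkz_node q n (S k) = x * mkz_weight q n x k.
Proof.
  unfold mkz_weight, mkz_node. rewrite <- (qbinom_shift q n k) by lra. simpl. ring.
Qed.

Lemma mkz_node_S_le k : mkz_node q n (S k) <= / qint q (S n) + q * mkz_node q n k.
Proof.
  unfold mkz_node.
  assert (0 < qint q (S n)) by (apply qint_pos; [lra | lia]).
  assert (0 < qint q (k + n)) by (apply qint_pos; [lra | lia]).
  assert (qint q (S n) <= qint q (S k + n)) by (apply qint_le; [lra | lia]).
  assert (qint q (k + n) <= qint q (S k + n)) by (apply qint_le; [lra | lia]).
  pose proof (qint_nonneg q k ltac:(lra)).
  rewrite qint_S. unfold Rdiv. rewrite Rmult_plus_distr_r, Rmult_1_l.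
  apply Rplus_le_compat; [apply Rinv_le_contravar; lra|].
  rewrite Rmult_assoc. apply Rmult_le_compat_l; [lra|].
  apply Rmult_le_compat_l; [lra | apply Rinv_le_contravar; lra].
Qed.

Lemma ex_series_mkz_weight_mult (g : nat -> R) C : (forall k, Rabs (g k) <= C) ->
  ex_series (fun k => mkz_weight q n x k * g k).
Proof.
  intros Hg. apply (ex_series_bounded_mult _ _ C); [|exact Hg|].
  - intros k. apply mkz_weight_nonneg; lra.
  - apply (mkz_weight_series q n x); lra.
Qed.

Lemma Rabs_mkz_node k : Rabs (mkz_node q n k) <= 1.
Proof. pose proof (mkz_node_unit k). rewrite Rabs_pos_eq; lra. Qed.

Lemma Rabs_mkz_node_sq k : Rabs (mkz_node q n k * mkz_node q n k) <= 1.
Proof. pose proof (mkz_node_unit k). rewrite Rabs_pos_eq; nra. Qed.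

Lemma mkz_moment1 :
  Series (fun k => mkz_weight q n x k * mkz_node q n k) = x * Series (mkz_weight q n x).
Proof.
  rewrite Series_incr_1 by (apply (ex_series_mkz_weight_mult _ 1), Rabs_mkz_node).
  rewrite mkz_node_0, Rmult_0_r, Rplus_0_l, <- Series_scal_l.
  apply Series_ext. intros k. apply mkz_weight_node.
Qed.

Lemma mkz_moment2_le :
  Series (fun k => mkz_weight q n x k * (mkz_node q n k * mkz_node q n k)) <=
  x * (/ qint q (S n) + q * x) * Series (mkz_weight q n x).
Proof.
  pose proof (mkz_weight_series q n x q_range x_range) as [Hex _].
  assert (Hw : forall k, 0 <= mkz_weight q n x k) by (intros; apply mkz_weight_nonneg; lra).
  rewrite Series_incr_1 by (apply (ex_series_mkz_weight_mult _ 1), Rabs_mkz_node_sq).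
  rewrite mkz_node_0, Rmult_0_l, Rmult_0_r, Rplus_0_l.
  rewrite (Series_ext _ (fun k => x * (mkz_weight q n x k * mkz_node q n (S k))))
    by (intros k; rewrite <- Rmult_assoc, mkz_weight_node; ring).
  rewrite Series_scal_l, Rmult_assoc. apply Rmult_le_compat_l; [lra|].
  replace ((/ qint q (S n) + q * x) * Series (mkz_weight q n x)) with
    (Series (fun k => / qint q (S n) * mkz_weight q n x k +
                      q * (mkz_weight q n x k * mkz_node q n k))).
  - apply Series_Rle.
    + intros k. pose proof (mkz_node_S_le k). pose proof (Hw k). nra.
    + apply (ex_series_mkz_weight_mult _ 1). intros k. apply Rabs_mkz_node.
    + apply ex_series_Rplus; apply ex_series_Rscal;
        [exact Hex | apply (ex_series_mkz_weight_mult _ 1), Rabs_mkz_node].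
    - rewrite Series_plus, !Series_scal_l, mkz_moment1; [ring | |].
      + apply ex_series_Rscal, Hex.
      + apply ex_series_Rscal, (ex_series_mkz_weight_mult _ 1), Rabs_mkz_node.
Qed.

Lemma mkz_variance_le :
  Series (fun k => qprod q n x * mkz_weight q n x k *
                   ((mkz_node q n k - x) * (mkz_node q n k - x))) <= / qint q (S n).
Proof.
  pose proof (mkz_weight_series q n x q_range x_range) as [Hex HF].
  pose proof (qprod_pos q n x q_range x_range) as HP.
  assert (Hqi : 0 < qint q (S n)) by (apply qint_pos; [lra | lia]).
  pose proof (Rinv_0_lt_compat _ Hqi).
  rewrite (Series_ext _ (fun k => qprod q n x *
      (mkz_weight q n x k * (mkz_node q n k * mkz_node q n k)) +
      ((-2 * x * qprod q n x) * (mkz_weight q n x k * mkz_node q n k) +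
       (x * x * qprod q n x) * mkz_weight q n x k))) by (intros; ring).
  rewrite Series_plus, Series_plus, !Series_scal_l, mkz_moment1.
  - pose proof (Rmult_le_compat_l _ _ _ (Rlt_le _ _ HP) mkz_moment2_le) as Hm2.
    rewrite HF in *.
    replace (qprod q n x * (x * (/ qint q (S n) + q * x) * / qprod q n x))
      with (x * / qint q (S n) + q * x * x) in Hm2 by (field; lra).
    replace (-2 * x * qprod q n x * (x * / qprod q n x)) with (-2 * x * x) by (field; lra).
    replace (x * x * qprod q n x * / qprod q n x) with (x * x) by (field; lra).
    assert (x * / qint q (S n) <= / qint q (S n)) by nra.
    assert (q * x * x <= x * x) by nra.
    lra.
  - apply ex_series_Rscal, (ex_series_mkz_weight_mult _ 1), Rabs_mkz_node.
  - apply ex_series_Rscal, Hex.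
  - apply ex_series_Rscal, (ex_series_mkz_weight_mult _ 1), Rabs_mkz_node_sq.
  - apply ex_series_Rplus; apply ex_series_Rscal;
      [apply (ex_series_mkz_weight_mult _ 1), Rabs_mkz_node | exact Hex].
Qed.

End MKZMoments.

Lemma korovkin_series (w t : nat -> R) (f : R -> R) x B e d eta :
  0 <= e -> 0 < d -> (forall y, 0 <= y <= 1 -> Rabs (f y) <= B) ->
  (forall y z, 0 <= y <= 1 -> 0 <= z <= 1 -> Rabs (y - z) < d -> Rabs (f y - f z) < e) ->
  0 <= x <= 1 -> (forall k, 0 <= w k) -> (forall k, 0 <= t k <= 1) ->
  ex_series w -> Series w = 1 ->
  Series (fun k => w k * ((t k - x) * (t k - x))) <= eta ->
  Rabs (Series (fun k => w k * f (t k)) - f x) <= e + 2 * B / (d * d) * eta.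
Proof.
  intros He Hd Hb Hu Hx Hw Ht Hexw Hsw Hvar.
  assert (HB : 0 <= B) by (pose proof (Hb x Hx); pose proof (Rabs_pos (f x)); lra).
  set (K := 2 * B / (d * d)).
  assert (HK : 0 <= K) by (apply Rdiv_le_0_compat; [lra | apply Rmult_lt_0_compat; lra]).
  assert (Hexv : ex_series (fun k => w k * ((t k - x) * (t k - x)))).
  { apply (ex_series_bounded_mult _ _ 1 Hw); [|exact Hexw].
    intros k. specialize (Ht k). assert (-1 <= t k - x <= 1) by lra.
    rewrite Rabs_pos_eq by apply Rle_0_sqr. nra. }
  set (u := fun k => w k * (f (t k) - f x)).
  assert (Hexu : ex_series u).
  { apply (ex_series_bounded_mult _ _ (2 * B) Hw); [|exact Hexw].
    intros k. pose proof (Rabs_triang (f (t k)) (- f x)). rewrite Rabs_Ropp in H.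
    pose proof (Hb (t k) (Ht k)). pose proof (Hb x Hx). unfold Rminus. lra. }
  replace (Series (fun k => w k * f (t k)) - f x) with (Series u).
  2:{ unfold u. rewrite (Series_ext _ (fun k => w k * f (t k) - f x * w k)) by (intros; ring).
      rewrite Series_minus, Series_scal_l, Hsw; [ring | | apply ex_series_Rscal, Hexw].
      apply (ex_series_Rext (fun k => u k + f x * w k)); [intros; unfold u; ring|].
      apply ex_series_Rplus; [exact Hexu | apply ex_series_Rscal, Hexw]. }
  set (b := fun k => e * w k + K * (w k * ((t k - x) * (t k - x)))).
  assert (Hub : forall k, Rabs (u k) <= b k).
  { intros k. unfold u, b. rewrite Rabs_mult, (Rabs_pos_eq (w k)) by apply Hw.
    pose proof (unif_cont_sq_bound f B e d He Hd Hb Hu (t k) x (Ht k) Hx). fold K in H.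
    pose proof (Hw k). nra. }
  assert (Hexb : ex_series b) by (apply ex_series_Rplus; apply ex_series_Rscal; assumption).
  eapply Rle_trans; [apply Series_Rabs|].
  - apply (ex_series_le (V := R_CompleteNormedModule) _ b); [|exact Hexb].
    intros k. change norm with Rabs. rewrite Rabs_Rabsolu. apply Hub.
  - eapply Rle_trans.
    { apply (Series_le _ b); [intros k; split; [apply Rabs_pos | apply Hub] | exact Hexb]. }
    unfold b. rewrite Series_plus, !Series_scal_l, Hsw by (apply ex_series_Rscal; assumption).
    pose proof (Rmult_le_compat_l K _ _ HK Hvar). lra.
Qed.

Lemma MKZ_bound q n h B e d : 0 < q <= 1 -> (1 <= n)%nat -> 0 <= e -> 0 < d ->
  (forall y, 0 <= y <= 1 -> Rabs (h y) <= B) ->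
  (forall y z, 0 <= y <= 1 -> 0 <= z <= 1 -> Rabs (y - z) < d -> Rabs (h y - h z) < e) ->
  forall x, 0 <= x <= 1 -> Rabs (MKZ q n h x - h x) <= e + 2 * B / (d * d) * / qint q (S n).
Proof.
  intros Hq Hn He Hd Hb Hu x Hx.
  assert (HB : 0 <= B) by (pose proof (Hb x Hx); pose proof (Rabs_pos (h x)); lra).
  assert (0 <= 2 * B / (d * d) * / qint q (S n)).
  { apply Rmult_le_pos; [apply Rdiv_le_0_compat; [lra | apply Rmult_lt_0_compat; lra]|].
    left. apply Rinv_0_lt_compat, qint_pos; [lra | lia]. }
  destruct (Rlt_dec x 1) as [Hx1|Hx1].
  2:{ replace x with 1 by lra. rewrite MKZ_at_1, Rminus_diag, Rabs_R0. lra. }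
  pose proof (qprod_pos q n x Hq ltac:(lra)) as HP.
  destruct (mkz_weight_series q n x Hq ltac:(lra)) as [Hex HF].
  rewrite MKZ_lt_1, <- Series_scal_l by exact Hx1.
  rewrite (Series_ext _ (fun k => qprod q n x * mkz_weight q n x k * h (mkz_node q n k)))
    by (intros; ring).
  apply korovkin_series; try assumption.
  - intros k. apply Rmult_le_pos; [lra | apply mkz_weight_nonneg; lra].
  - intros k. apply mkz_node_unit; lra || lia.
  - apply ex_series_Rscal, Hex.
  - rewrite Series_scal_l, HF. field. lra.
  - apply mkz_variance_le; lra || lia.
Qed.

Theorem MKZ_unif_conv (q : nat -> R) h :
  (forall n : nat, (1 <= n)%nat -> 0 < q n <= 1) -> is_lim_seq q 1 -> continuous_01 h ->
  forall eps, 0 < eps -> exists N, forall n, (N <= n)%nat -> (1 <= n)%nat ->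
  forall x, 0 <= x <= 1 -> Rabs (h x - MKZ (q n) n h x) <= eps.
Proof.
  intros Hq Hlim Hh eps Heps.
  destruct (continuous_01_bounded h Hh) as [B [HB Hb]].
  destruct (continuous_01_unif h Hh (eps / 2)) as [d [Hd Hu]]; [lra|].
  set (K := 2 * B / (d * d)).
  assert (HK : 0 <= K) by (apply Rdiv_le_0_compat; [lra | apply Rmult_lt_0_compat; lra]).
  destruct (qint_unbounded q Hq Hlim (2 * K / eps + 1)) as [N HN].
  exists N. intros n Hn Hn1 x Hx. rewrite Rabs_minus_sym.
  eapply Rle_trans; [apply (MKZ_bound (q n) n h B (eps / 2) d); auto; lra|].
  specialize (HN n Hn).
  assert (0 <= 2 * K / eps) by (apply Rdiv_le_0_compat; lra).
  assert (K * / qint (q n) (S n) <= eps / 2).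
  { apply Rle_trans with (K * / (2 * K / eps + 1)).
    - apply Rmult_le_compat_l; [exact HK | apply Rinv_le_contravar; lra].
    - apply (Rmult_le_reg_r (2 * K / eps + 1)); [lra|].
      rewrite Rmult_assoc, Rinv_l by lra.
      replace (eps / 2 * (2 * K / eps + 1)) with (K + eps / 2) by (field; lra). lra. }
  fold K. lra.
Qed.

(** * Fractal perturbation *)

Section ReadBajraktarevic.
Variable N : nat.
Variable xs : nat -> R.
Hypothesis xs_1 : xs 1%nat = 0.
Hypothesis xs_N : xs N = 1.
Hypothesis xs_lt : forall i : nat, (1 <= i < N)%nat -> xs i < xs (S i).
Hypothesis N_ge_2 : (2 <= N)%nat.
Variable alpha : nat -> R -> R.
Variable c : R.
Hypothesis c_range : 0 <= c < 1.
Hypothesis alpha_le : forall i, (1 <= i <= N - 1)%nat ->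
  forall x, 0 <= x <= 1 -> Rabs (alpha i x) <= c.
Variable g : R -> R.
Variable eta : R.
Hypothesis g_le : forall x, 0 <= x <= 1 -> Rabs (g x) <= eta.
Hypothesis g_0 : g 0 = 0.
Hypothesis g_1 : g 1 = 0.

Lemma xs_le i j : (1 <= i <= j)%nat -> (j <= N)%nat -> xs i <= xs j.
Proof.
  intros Hij HjN. induction j as [|j IH]; [lia|].
  destruct (Nat.eq_dec i (S j)) as [->|Hne]; [lra|].
  assert (xs i <= xs j) by (apply IH; lia).
  assert (xs j < xs (S j)) by (apply xs_lt; lia). lra.
Qed.

Lemma uaff_bounds i x : (1 <= i <= N - 1)%nat -> 0 <= x <= 1 ->
  xs i <= uaff xs i x <= xs (S i).
Proof. intros Hi Hx. unfold uaff. assert (xs i < xs (S i)) by (apply xs_lt; lia). nra. Qed.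

Lemma uaff_unit i x : (1 <= i <= N - 1)%nat -> 0 <= x <= 1 -> 0 <= uaff xs i x <= 1.
Proof.
  intros Hi Hx. pose proof (uaff_bounds i x Hi Hx).
  assert (xs 1 <= xs i) by (apply xs_le; lia).
  assert (xs (S i) <= xs N) by (apply xs_le; lia). lra.
Qed.

Lemma uaff_eq_cases i x j z : (1 <= i <= N - 1)%nat -> (1 <= j <= N - 1)%nat ->
  0 <= x <= 1 -> 0 <= z <= 1 -> uaff xs i x = uaff xs j z ->
  (i = j /\ x = z) \/ ((x = 0 \/ x = 1) /\ (z = 0 \/ z = 1)).
Proof.
  intros Hi Hj Hx Hz E.
  assert (xs i < xs (S i)) by (apply xs_lt; lia).
  assert (xs j < xs (S j)) by (apply xs_lt; lia).
  pose proof (uaff_bounds i x Hi Hx). pose proof (uaff_bounds j z Hj Hz).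
  destruct (lt_eq_lt_dec i j) as [[Hlt| ->]|Hlt]; unfold uaff in *.
  - right. assert (xs (S i) <= xs j) by (apply xs_le; lia).
    assert (x = 1) by nra. assert (z = 0) by nra. lra.
  - left. split; [reflexivity|]. apply (Rmult_eq_reg_l (xs (S j) - xs j)); lra.
  - right. assert (xs (S j) <= xs i) by (apply xs_le; lia).
    assert (x = 0) by nra. assert (z = 1) by nra. lra.
Qed.

Lemma uaff_onto y : 0 <= y <= 1 ->
  exists i x, (1 <= i <= N - 1)%nat /\ 0 <= x <= 1 /\ uaff xs i x = y.
Proof.
  intros Hy.
  assert (Hseg : forall k, (2 <= k <= N)%nat -> y <= xs k ->
     exists i, (1 <= i <= k - 1)%nat /\ xs i <= y <= xs (S i)).
  { induction k as [|k IH]; intros Hk Hyk; [lia|].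
    destruct (Rle_dec (xs k) y) as [Hle|Hlt]; [exists k; split; [lia | lra]|].
    destruct (Nat.eq_dec k 1) as [->|Hk1]; [rewrite xs_1 in Hlt; lra|].
    destruct (IH ltac:(lia) ltac:(lra)) as [i [Hi Hi2]]. exists i. split; [lia | exact Hi2]. }
  destruct (Hseg N ltac:(lia) ltac:(lra)) as [i [Hi [H1 H2]]].
  assert (Hd : xs i < xs (S i)) by (apply xs_lt; lia).
  exists i, ((y - xs i) / (xs (S i) - xs i)). split; [lia|]. split.
  - split; [apply Rdiv_le_0_compat; lra|].
    apply (Rmult_le_reg_r (xs (S i) - xs i)); [lra|].
    unfold Rdiv. rewrite Rmult_assoc, Rinv_l by lra. lra.
  - unfold uaff. field. lra.
Qed.

Definition is_chart (y : R) (p : nat * R) : Prop :=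
  0 <= y <= 1 -> (1 <= fst p <= N - 1)%nat /\ 0 <= snd p <= 1 /\ uaff xs (fst p) (snd p) = y.

Lemma chart_exists y : exists p, is_chart y p.
Proof.
  destruct (classic (0 <= y <= 1)) as [Hy|Hy].
  - destruct (uaff_onto y Hy) as [i [x H]]. exists (i, x). intros _. exact H.
  - exists (O, 0). intros H. contradiction.
Qed.

(* A chosen preimage (i, x) of y; at an interior node x_i both (i - 1, 1) and (i, 0) are
   preimages, which is harmless because D and g vanish at 0 and 1 below. *)
Definition chart (y : R) : nat * R :=
  proj1_sig (constructive_indefinite_description _ (chart_exists y)).

Lemma chart_spec y : is_chart y (chart y).
Proof. unfold chart. destruct (constructive_indefinite_description _ _). exact i. Qed.

Definition rb_op (D : R -> R) (y : R) : R :=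
  alpha (fst (chart y)) (snd (chart y)) * (D (snd (chart y)) + g (snd (chart y))).

Lemma rb_op_uaff D : D 0 = 0 -> D 1 = 0 -> forall i x, (1 <= i <= N - 1)%nat -> 0 <= x <= 1 ->
  rb_op D (uaff xs i x) = alpha i x * (D x + g x).
Proof.
  intros D0 D1 i x Hi Hx. unfold rb_op.
  destruct (chart_spec (uaff xs i x) (uaff_unit i x Hi Hx)) as [Hj [Hz E]].
  destruct (uaff_eq_cases i x _ _ Hi Hj Hx Hz (eq_sym E)) as [[<- <-]|[Hx01 Hz01]];
    [reflexivity|].
  destruct Hx01 as [-> | ->]; destruct Hz01 as [-> | ->]; rewrite ?D0, ?D1, ?g_0, ?g_1; ring.
Qed.

Lemma rb_op_ends D : D 0 = 0 -> D 1 = 0 -> rb_op D 0 = 0 /\ rb_op D 1 = 0.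
Proof.
  intros D0 D1. split.
  - replace 0 with (uaff xs 1 0) at 1 by (unfold uaff; rewrite xs_1; ring).
    rewrite rb_op_uaff, D0, g_0 by (assumption || lia || lra). ring.
  - replace 1 with (uaff xs (N - 1) 1) at 1
      by (unfold uaff; replace (S (N - 1)) with N by lia; rewrite xs_N; ring).
    rewrite rb_op_uaff, D1, g_1 by (assumption || lia || lra). ring.
Qed.

Lemma chart_unit y : 0 <= y <= 1 -> (1 <= fst (chart y) <= N - 1)%nat /\ 0 <= snd (chart y) <= 1.
Proof. intros Hy. destruct (chart_spec y Hy) as [H1 [H2 _]]. split; assumption. Qed.

Fixpoint rb_iter (k : nat) : R -> R :=
  match k with O => fun _ => 0 | S k' => rb_op (rb_iter k') end.

Lemma rb_iter_ends k : rb_iter k 0 = 0 /\ rb_iter k 1 = 0.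
Proof.
  induction k as [|k [IH0 IH1]]; simpl; [split; reflexivity|]. apply rb_op_ends; assumption.
Qed.

Lemma rb_iter_step k y : 0 <= y <= 1 -> Rabs (rb_iter (S k) y - rb_iter k y) <= c ^ k * (c * eta).
Proof.
  revert y. induction k as [|k IH]; intros y Hy; destruct (chart_unit y Hy) as [Hi Hx].
  - simpl. unfold rb_op. rewrite Rminus_0_r, Rplus_0_l, Rabs_mult, Rmult_1_l.
    apply Rmult_le_compat; [apply Rabs_pos | apply Rabs_pos | apply alpha_le | apply g_le];
      assumption.
  - replace (c ^ S k * (c * eta)) with (c * (c ^ k * (c * eta))) by (simpl; ring).
    change (Rabs (rb_op (rb_iter (S k)) y - rb_op (rb_iter k) y) <= c * (c ^ k * (c * eta))).
    unfold rb_op.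
    replace (alpha _ _ * (rb_iter (S k) (snd (chart y)) + g _) -
             alpha _ _ * (rb_iter k (snd (chart y)) + g _))
      with (alpha (fst (chart y)) (snd (chart y)) *
            (rb_iter (S k) (snd (chart y)) - rb_iter k (snd (chart y)))) by ring.
    rewrite Rabs_mult.
    apply Rmult_le_compat; [apply Rabs_pos | apply Rabs_pos | apply alpha_le | apply IH];
      assumption.
Qed.

Lemma eta_nonneg : 0 <= eta.
Proof. pose proof (g_le 0 ltac:(lra)). pose proof (Rabs_pos (g 0)). lra. Qed.

Lemma rb_iter_bound k y : 0 <= y <= 1 -> Rabs (rb_iter k y) <= c * eta / (1 - c).
Proof.
  pose proof eta_nonneg.
  assert (0 <= c * eta / (1 - c)) by (apply Rdiv_le_0_compat; nra).
  revert y. induction k as [|k IH]; intros y Hy; simpl; [rewrite Rabs_R0; assumption|].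
  destruct (chart_unit y Hy) as [Hi Hx]. unfold rb_op. rewrite Rabs_mult.
  apply Rle_trans with (c * (c * eta / (1 - c) + eta)).
  - apply Rmult_le_compat; [apply Rabs_pos | apply Rabs_pos | apply alpha_le; assumption|].
    eapply Rle_trans; [apply Rabs_triang|]. apply Rplus_le_compat; auto.
  - right. field. lra.
Qed.

Lemma rb_iter_cv y : 0 <= y <= 1 -> ex_finite_lim_seq (fun k => rb_iter k y).
Proof.
  intros Hy.
  assert (Hex : ex_series (fun k => rb_iter (S k) y - rb_iter k y)).
  { apply (ex_series_le (V := R_CompleteNormedModule) _ (fun k => (c * eta) * c ^ k)).
    - intros k. change norm with Rabs. rewrite Rmult_comm. apply rb_iter_step, Hy.
    - apply ex_series_Rscal, ex_series_geom. rewrite Rabs_pos_eq; lra. }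
  destruct Hex as [L HL]. exists L. apply is_lim_seq_incr_1.
  apply (is_lim_seq_ext (sum_n (fun k => rb_iter (S k) y - rb_iter k y))); [|exact HL].
  induction n as [|n IH].
  - rewrite sum_O. simpl (rb_iter 0 y). change (rb_iter 1 y - 0 = rb_iter 1 y). ring.
  - rewrite sum_Sn, IH. change (rb_iter (S n) y + (rb_iter (S (S n)) y - rb_iter (S n) y) =
                                rb_iter (S (S n)) y). ring.
Qed.

Definition rb_limit (y : R) : R := real (Lim_seq (fun k => rb_iter k y)).

Lemma is_lim_rb_limit y : 0 <= y <= 1 -> is_lim_seq (fun k => rb_iter k y) (rb_limit y).
Proof.
  intros Hy. destruct (rb_iter_cv y Hy) as [L HL].
  unfold rb_limit. rewrite (is_lim_seq_unique _ _ HL). exact HL.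
Qed.

Lemma rb_limit_fixed : exists D : R -> R,
  (forall x, 0 <= x <= 1 -> Rabs (D x) <= c * eta / (1 - c)) /\
  (forall i x, (1 <= i <= N - 1)%nat -> 0 <= x <= 1 ->
     D (uaff xs i x) = alpha i x * (D x + g x)).
Proof.
  exists rb_limit. split.
  - intros x Hx. apply Rabs_le.
    pose proof (is_lim_rb_limit x Hx) as Hl.
    assert (Hb : forall k, - (c * eta / (1 - c)) <= rb_iter k x <= c * eta / (1 - c))
      by (intros k; apply Rabs_le_between, rb_iter_bound, Hx).
    split.
    + assert (Hle : Rbar_le (- (c * eta / (1 - c))) (rb_limit x)).
      { apply (is_lim_seq_le (fun _ => - (c * eta / (1 - c))) (fun k => rb_iter k x));
          [intros k; apply Hb | apply is_lim_seq_const | exact Hl]. }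
      exact Hle.
    + assert (Hle : Rbar_le (rb_limit x) (c * eta / (1 - c))).
      { apply (is_lim_seq_le (fun k => rb_iter k x) (fun _ => c * eta / (1 - c)));
          [intros k; apply Hb | exact Hl | apply is_lim_seq_const]. }
      exact Hle.
  - intros i x Hi Hx.
    assert (Hl := is_lim_rb_limit (uaff xs i x) (uaff_unit i x Hi Hx)).
    apply is_lim_seq_incr_1 in Hl.
    assert (Hl' : is_lim_seq (fun k => rb_iter (S k) (uaff xs i x))
                             (alpha i x * (rb_limit x + g x))).
    { apply (is_lim_seq_ext (fun k => alpha i x * (rb_iter k x + g x))).
      - intros k. simpl. destruct (rb_iter_ends k). rewrite rb_op_uaff; auto.
      - apply (is_lim_seq_scal_l _ (alpha i x) (rb_limit x + g x)).
        apply is_lim_seq_plus'; [apply is_lim_rb_limit, Hx | apply is_lim_seq_const]. }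
    apply is_lim_seq_unique in Hl. apply is_lim_seq_unique in Hl'.
    rewrite Hl in Hl'. injection Hl'. auto.
Qed.

End ReadBajraktarevic.

(* G = h + D, where D is the fixed point of the Read-Bajraktarevic operator driven by
   h - M_(n,q) h, which vanishes at 0 and 1. *)
Lemma fractal_near N xs (Hx1 : xs 1%nat = 0) (HxN : xs N = 1)
  (Hxinc : forall i : nat, (1 <= i < N)%nat -> xs i < xs (S i))
  alpha c (Hc : 0 <= c < 1)
  (Hal : forall i, (1 <= i <= N - 1)%nat -> forall x, 0 <= x <= 1 -> Rabs (alpha i x) <= c)
  q n h eta (Hq : 0 < q <= 1) (Hh : exists B, forall x, 0 <= x <= 1 -> Rabs (h x) <= B)
  (Heta : forall x, 0 <= x <= 1 -> Rabs (h x - MKZ q n h x) <= eta) :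
  exists G, is_fractal N xs alpha q n h G /\
    forall x, 0 <= x <= 1 -> Rabs (G x - h x) <= c * eta / (1 - c).
Proof.
  assert (He : 0 <= eta)
    by (pose proof (Heta 0 ltac:(lra)); pose proof (Rabs_pos (h 0 - MKZ q n h 0)); lra).
  destruct Hh as [B HB].
  destruct (le_lt_dec 2 N) as [HN2|HN2].
  - destruct (rb_limit_fixed N xs Hx1 HxN Hxinc HN2 alpha c Hc Hal
      (fun x => h x - MKZ q n h x) eta Heta) as [D [HD1 HD2]].
    + rewrite MKZ_at_0 by exact Hq. ring.
    + rewrite MKZ_at_1. ring.
    + exists (fun x => h x + D x). split; [split|].
      * exists (B + c * eta / (1 - c)). intros x Hx.
        eapply Rle_trans; [apply Rabs_triang | apply Rplus_le_compat; auto].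
      * intros i x Hi Hx. rewrite HD2 by assumption. ring.
      * intros x Hx. replace (h x + D x - h x) with (D x) by ring. auto.
  - exists h. split; [split; [exists B; exact HB | intros i x Hi; lia]|].
    intros x Hx. rewrite Rminus_diag, Rabs_R0. apply Rdiv_le_0_compat; nra.
Qed.

Lemma alpha_uniform_bound N (alpha : nat -> R -> R) :
  (forall i : nat, (1 <= i <= N - 1)%nat ->
     exists c : R, c < 1 /\ forall x, 0 <= x <= 1 -> Rabs (alpha i x) <= c) ->
  exists c, 0 <= c < 1 /\
    forall i, (1 <= i <= N - 1)%nat -> forall x, 0 <= x <= 1 -> Rabs (alpha i x) <= c.
Proof.
  intros H.
  assert (Hm : forall m, exists c, 0 <= c < 1 /\ forall i, (1 <= i <= m)%nat ->
            (i <= N - 1)%nat -> forall x, 0 <= x <= 1 -> Rabs (alpha i x) <= c).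
  { induction m as [|m [c [Hc Hm]]]; [exists 0; split; [lra | intros; lia]|].
    destruct (le_dec (S m) (N - 1)) as [Hle|Hgt].
    - destruct (H (S m) ltac:(lia)) as [c' [Hc' Hm']].
      exists (Rmax c c'). split; [split; [apply Rle_trans with c; [lra | apply Rmax_l] |
                                         apply Rmax_lub_lt; lra]|].
      intros i Hi HiN x Hx. destruct (Nat.eq_dec i (S m)) as [->|Hne].
      + eapply Rle_trans; [apply Hm'; exact Hx | apply Rmax_r].
      + eapply Rle_trans; [apply Hm; auto; lia | apply Rmax_l].
    - exists c. split; [exact Hc|]. intros i Hi HiN x Hx. apply Hm; auto; lia. }
  destruct (Hm (N - 1)%nat) as [c [Hc Hc']]. exists c. split; [exact Hc|].
  intros i Hi x Hx. apply Hc'; auto; lia.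
Qed.

Lemma eventually_forall_fin (P : nat -> nat -> Prop) M :
  (forall j, (1 <= j <= M)%nat -> exists Nj, forall n, (Nj <= n)%nat -> P j n) ->
  exists N0, forall n, (N0 <= n)%nat -> forall j, (1 <= j <= M)%nat -> P j n.
Proof.
  induction M as [|M IH]; intros H; [exists O; intros; lia|].
  destruct IH as [N1 H1]; [intros j Hj; apply H; lia|].
  destruct (H (S M) ltac:(lia)) as [N2 H2].
  exists (max N1 N2). intros n Hn j Hj.
  destruct (Nat.eq_dec j (S M)) as [->|Hne]; [apply H2 | apply H1]; lia.
Qed.

Lemma fractal_family N xs (Hx1 : xs 1%nat = 0) (HxN : xs N = 1)
  (Hxinc : forall i : nat, (1 <= i < N)%nat -> xs i < xs (S i))
  (q : nat -> R) (Hq : forall n : nat, (1 <= n)%nat -> 0 < q n <= 1) (Hqlim : is_lim_seq q 1)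
  alpha c (Hc : 0 <= c < 1)
  (Hal : forall i, (1 <= i <= N - 1)%nat -> forall x, 0 <= x <= 1 -> Rabs (alpha i x) <= c)
  (lam : nat -> R) (Hlam : forall i : nat, (1 <= i)%nat -> 0 < lam i) M delta :
  0 < delta -> exists n (G : nat -> R -> R), (1 <= n)%nat /\
    forall j, (1 <= j <= M)%nat -> is_fractal N xs alpha (q n) n (xpow (lam j)) (G j) /\
      forall x, 0 <= x <= 1 -> Rabs (G j x - xpow (lam j) x) <= delta.
Proof.
  intros Hdelta. set (eta := delta * (1 - c)).
  assert (Heta : 0 < eta) by (apply Rmult_lt_0_compat; lra).
  destruct (eventually_forall_fin (fun j n => (1 <= n)%nat -> forall x, 0 <= x <= 1 ->
      Rabs (xpow (lam j) x - MKZ (q n) n (xpow (lam j)) x) <= eta) M) as [N0 HN0].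
  { intros j Hj. apply MKZ_unif_conv; [exact Hq | exact Hqlim | | exact Heta].
    apply xpow_continuous_01, Hlam. lia. }
  set (n := max N0 1).
  assert (HG : forall j, exists Gj, (1 <= j <= M)%nat ->
     is_fractal N xs alpha (q n) n (xpow (lam j)) Gj /\
     forall x, 0 <= x <= 1 -> Rabs (Gj x - xpow (lam j) x) <= delta).
  { intros j. destruct (le_dec 1 j) as [Hj1|Hj1]; [destruct (le_dec j M) as [Hj2|Hj2]|];
      [| exists (fun _ => 0); intros; lia ..].
    destruct (fractal_near N xs Hx1 HxN Hxinc alpha c Hc Hal (q n) n (xpow (lam j)) eta)
      as [Gj [HGj Hnear]].
    - apply Hq. lia.
    - exists 1. intros x Hx. pose proof (xpow_unit (lam j) x (Hlam j Hj1) Hx).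
      rewrite Rabs_pos_eq; lra.
    - apply (HN0 n ltac:(lia) j ltac:(lia)). lia.
    - exists Gj. intros _. split; [exact HGj|]. intros x Hx.
      eapply Rle_trans; [apply Hnear, Hx|]. unfold eta.
      replace (c * (delta * (1 - c)) / (1 - c)) with (c * delta) by (field; lra). nra. }
  destruct (functional_choice _ HG) as [G HGs].
  exists n, G. split; [lia | exact HGs].
Qed.

Lemma sum_n_m_Rabs_nonneg (c : nat -> R) n m : 0 <= sum_n_m (fun j => Rabs (c j)) n m.
Proof.
  apply Rle_trans with (sum_n_m (fun _ => 0) n m).
  - right. symmetry. apply sum_n_m_Rzero. reflexivity.
  - apply sum_n_m_le. intros k. apply Rabs_pos.
Qed.

Lemma muntz_comb_perturb lam m c (G : nat -> R -> R) x eps : 0 < eps ->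
  (forall j, (1 <= j <= m)%nat ->
     Rabs (G j x - xpow (lam j) x) <= eps / (1 + sum_n_m (fun j => Rabs (c j)) 1 m)) ->
  Rabs (muntz_comb lam m c x - (c O + sum_n_m (fun j => c j * G j x) 1 m)) < eps.
Proof.
  intros Heps HG. unfold muntz_comb.
  set (S0 := sum_n_m (fun j => Rabs (c j)) 1 m).
  assert (HS0 : 0 <= S0) by apply sum_n_m_Rabs_nonneg.
  assert (E : c O + sum_n_m (fun j => c j * xpow (lam j) x) 1 m -
              (c O + sum_n_m (fun j => c j * G j x) 1 m) =
              sum_n_m (fun j => c j * (xpow (lam j) x - G j x)) 1 m).
  { rewrite (sum_n_m_Rext (fun j => c j * (xpow (lam j) x - G j x))
                          (fun j => c j * xpow (lam j) x + (-1) * (c j * G j x)))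
      by (intros; ring).
    rewrite sum_n_m_Rplus, sum_n_m_Rmult_l. ring. }
  rewrite E. eapply Rle_lt_trans; [apply sum_n_m_Rabs|].
  apply Rle_lt_trans with (S0 * (eps / (1 + S0))).
  - unfold S0. rewrite Rmult_comm, <- sum_n_m_Rmult_l. apply sum_n_m_Rle. intros j Hj.
    rewrite Rabs_mult, Rabs_minus_sym, Rmult_comm.
    apply Rmult_le_compat_r; [apply Rabs_pos | apply HG, Hj].
  - replace eps with ((1 + S0) * (eps / (1 + S0))) at 2 by (field; lra).
    apply Rmult_lt_compat_r; [apply Rdiv_lt_0_compat|]; lra.
Qed.

Theorem theorem5p2
  (N : nat) (xs : nat -> R)
  (Hx1 : xs 1%nat = 0) (HxN : xs N = 1)
  (Hxinc : forall i : nat, (1 <= i < N)%nat -> xs i < xs (S i))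
  (q : nat -> R)
  (Hq : forall n : nat, (1 <= n)%nat -> 0 < q n <= 1)
  (Hqlim : is_lim_seq q 1)
  (alpha : nat -> R -> R)
  (Halpha : forall i : nat, (1 <= i <= N - 1)%nat ->
     exists c : R, c < 1 /\ forall x, 0 <= x <= 1 -> Rabs (alpha i x) <= c)
  (lam : nat -> R)
  (Hlam_pos : forall i : nat, (1 <= i)%nat -> 0 < lam i)
  (Hlam_dist : forall i j : nat, (1 <= i)%nat -> (1 <= j)%nat -> i <> j -> lam i <> lam j)
  (Hlam_inf : exists d : R, 0 < d /\ forall i : nat, (1 <= i)%nat -> d <= lam i)
  (Hlam_div : is_lim_seq (fun m => sum_n_m (fun i => / lam i) 1 m) p_infty) :
  forall f : R -> R,
    (forall x, 0 <= x <= 1 -> forall e, 0 < e -> exists d, 0 < d /\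
        forall y, 0 <= y <= 1 -> Rabs (y - x) < d -> Rabs (f y - f x) < e) ->
  forall eps : R, 0 < eps ->
    exists (n m : nat) (c : nat -> R) (G : nat -> R -> R),
      (1 <= n)%nat /\ (1 <= m)%nat /\
      (forall j : nat, (1 <= j <= m)%nat ->
          is_fractal N xs alpha (q n) n (xpow (lam j)) (G j)) /\
      (forall x, 0 <= x <= 1 ->
          Rabs (f x - (c O + sum_n_m (fun j => c j * G j x) 1 m)) < eps).
Proof.
  intros f Hf eps Heps.
  destruct (muntz_closure_continuous lam f Hlam_pos Hlam_dist Hlam_inf Hlam_div Hf (eps / 2))
    as [h [[m [a Hh]] Happ]]; [lra|].
  (* Padding with a zero coefficient makes the number of exponents at least 1. *)
  set (b := truncate m a).
  destruct (alpha_uniform_bound N alpha Halpha) as [c [Hc Hal]].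
  destruct (fractal_family N xs Hx1 HxN Hxinc q Hq Hqlim alpha c Hc Hal lam Hlam_pos (S m)
              (eps / 2 / (1 + sum_n_m (fun j => Rabs (b j)) 1 (S m)))) as [n [G [Hn HG]]].
  { pose proof (sum_n_m_Rabs_nonneg b 1 (S m)). apply Rdiv_lt_0_compat; lra. }
  exists n, (S m), b, G. split; [exact Hn|]. split; [lia|]. split; [apply HG|].
  intros x Hx.
  specialize (Happ x Hx). rewrite Hh, <- (muntz_comb_truncate lam m (S m)) in Happ by auto.
  pose proof (muntz_comb_perturb lam (S m) b G x (eps / 2) ltac:(lra)
                (fun j Hj => proj2 (HG j Hj) x Hx)) as Hpert.
  pose proof (Rabs_triang (f x - muntz_comb lam (S m) b x)
                (muntz_comb lam (S m) b x - (b O + sum_n_m (fun j => b j * G j x) 1 (S m))))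
    as Htri.
  replace (f x - muntz_comb lam (S m) b x + _) with
    (f x - (b O + sum_n_m (fun j => b j * G j x) 1 (S m))) in Htri by ring.
  fold b in Happ. lra.
Qed.
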